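(* Consider the $K$-armed stochastic bandit problem described in the context, with rewards in $[0,1]$, and let the agent use the following UCB policy: for $t=1,\dots,K$ play arm $t$; for $t\ge K+1$ play an arm maximizing \[\frac{S_a(t-1)}{N_a(t-1)}+\sqrt{\frac{\log(t)+3\log\log(t)}{2N_a(t-1)}}\] (ties broken arbitrarily). Let $a^*$ be an optimal arm and $a$ an arm with $\mu_a<\mu_{a^*}$. Then for every $\epsilon>0$ there exist a constant $C_1>0$ and positive numbers $C_2(\epsilon),\beta(\epsilon)$ such that for every integer $n\ge3$, \[\mathbb{E}[N_n(a)] \leq \frac{\log(n)}{2(\mu_a-\mu_{a^*})^2}(1+\epsilon) + C_1\log(\log(n)) + \frac{C_2(\epsilon)}{n^{\beta(\epsilon)}}\;.\]
   Context: Bandit setting: there are $K\ge 2$ arms. For each arm $a\in\{1,\dots,K\}$, $(X_{a,s})_{s\ge1}$ is an i.i.d. sequence of rewards taking values in $[0,1]$ with mean $\mu_a$; the sequences for different arms are independent. At each time $t$ a policy chooses an arm $A_t$ based on past choices and observed rewards, and receives $X_t=X_{A_t,N_{A_t}(t)}$, where $N_a(t)=\sum_{s=1}^t \mathbb{1}\{A_s=a\}$ (also written $N_n(a)$ for $t=n$), and $S_a(t)=\sum_{s\le t}\mathbb{1}\{A_s=a\}X_s$. $\mu_{a^*}=\max_a\mu_a$ and $a^*$ is any arm attaining it. *)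

From Stdlib Require Import Reals Lra List.
Import ListNotations.
Open Scope R_scope.

Record prob_space (Omega : Type) (F : (Omega -> Prop) -> Prop)
  (P : (Omega -> Prop) -> R) : Prop := {
  ps_full : F (fun _ => True);
  ps_compl : forall E, F E -> F (fun w => ~ E w);
  ps_union : forall E : nat -> Omega -> Prop,
      (forall n, F (E n)) -> F (fun w => exists n, E n w);
  ps_nonneg : forall E, F E -> 0 <= P E;
  ps_total : P (fun _ => True) = 1;
  ps_additive : forall E : nat -> Omega -> Prop,
      (forall n, F (E n)) ->
      (forall m n w, m <> n -> E m w -> E n w -> False) ->
      infinite_sum (fun n => P (E n)) (P (fun w => exists n, E n w))
}.

Definition measurable_rv {Omega} (F : (Omega -> Prop) -> Prop) (Y : Omega -> R) :=
  forall c : R, F (fun w => Y w <= c).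

Definition indep_family {Omega I} (P : (Omega -> Prop) -> R)
  (D : I -> Prop) (Y : I -> Omega -> R) : Prop :=
  forall (l : list I) (c : I -> R), NoDup l -> Forall D l ->
    P (fun w => Forall (fun i => Y i w <= c i) l)
    = fold_right Rmult 1 (map (fun i => P (fun w => Y i w <= c i)) l).

Definition same_law {Omega} (P : (Omega -> Prop) -> R) (Y Z : Omega -> R) :=
  forall c, P (fun w => Y w <= c) = P (fun w => Z w <= c).

(* Expectation of a random variable Y with values in [0,1]:
   limit of the expectations of the simple lower approximations
   floor(m Y)/m (m = M+1). *)
Definition is_mean01 {Omega} (P : (Omega -> Prop) -> R) (Y : Omega -> R) (mu : R) :=
  Un_cv (fun M => sum_f_R0 (fun k => INR k / INR (S M) *
           P (fun w => INR k <= INR (S M) * Y w < INR (S k))) (S M)) mu.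

Definition expect_nat {Omega} (P : (Omega -> Prop) -> R) (n : nat) (Y : Omega -> nat) : R :=
  sum_f_R0 (fun k => INR k * P (fun w => Y w = k)) n.

(* ---------- Bandit quantities ----------
   Arms are 1..K. X b s w = s-th reward of arm b (s >= 1).
   A t w = arm played at time t (t >= 1). *)

Fixpoint Npulls {Omega} (A : nat -> Omega -> nat) (b : nat) (t : nat) (w : Omega) : nat :=
  match t with
  | O => O
  | S t' => (Npulls A b t' w + (if Nat.eqb (A (S t') w) b then 1 else 0))%nat
  end.

Definition Xobs {Omega} (X : nat -> nat -> Omega -> R) (A : nat -> Omega -> nat)
  (t : nat) (w : Omega) : R :=
  X (A t w) (Npulls A (A t w) t w) w.

Fixpoint Ssum {Omega} (X : nat -> nat -> Omega -> R) (A : nat -> Omega -> nat)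
  (b : nat) (t : nat) (w : Omega) : R :=
  match t with
  | O => 0
  | S t' => Ssum X A b t' w + (if Nat.eqb (A (S t') w) b then Xobs X A (S t') w else 0)
  end.

Definition ucb_index {Omega} (X : nat -> nat -> Omega -> R) (A : nat -> Omega -> nat)
  (b : nat) (t : nat) (w : Omega) : R :=
  Ssum X A b (t - 1) w / INR (Npulls A b (t - 1) w)
  + sqrt ((ln (INR t) + 3 * ln (ln (INR t))) / (2 * INR (Npulls A b (t - 1) w))).

Definition is_ucb_policy {Omega} (K : nat) (X : nat -> nat -> Omega -> R)
  (A : nat -> Omega -> nat) : Prop :=
  (forall t w, (1 <= t <= K)%nat -> A t w = t) /\
  (forall t w, (K + 1 <= t)%nat ->
     (1 <= A t w <= K)%nat /\
     forall b, (1 <= b <= K)%nat -> ucb_index X A b t w <= ucb_index X A (A t w) t w).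

From Stdlib Require Import Reals Lra Lia List Arith Classical ClassicalEpsilon
  FunctionalExtensionality PropExtensionality Permutation.
From Coquelicot Require Coquelicot.
Open Scope R_scope.

(* Two kinds of bad events drive the pulls of the suboptimal arm [a].  Either the UCB index of
   the optimal arm, computed from some sample size [s <= t], falls below [mu astar - del]; by a
   Chernoff-Hoeffding bound this has probability at most [q^s exp (- f t)] with [q < 1] and
   [f t = ln t + 3 ln ln t], and [exp (- f t) <= 1/(t ln t)] makes the total over [t <= n] at
   most [O(1) + eta ln n] for any [eta > 0].  Or the empirical mean of [a] after [s] pulls
   exceeds [mu a + del], with geometrically decaying probability in [s].  Outside these events
   [a] is no longer played once it has been pulled [u ~ f n / (2 (mu astar - mu a - 2 del)^2)]
   times, since its index would then be below that of [astar].  The only access to means is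
   [is_mean01], so rewards are discretised on a grid of mesh [1/M]; the Chernoff bound is
   proved for the grid values, whose means are within [del/2] of the true ones for large [M]. *)

(** * Elementary real analysis *)

Lemma Rmult_le_div_iff a b c : 0 < c -> (c * a <= b <-> a <= b / c).
Proof.
  intros hc. unfold Rdiv. split; intros h.
  - apply (Rmult_le_reg_l c); auto. rewrite <- Rmult_assoc, (Rmult_comm c b), Rmult_assoc,
      Rinv_r, Rmult_1_r by lra. auto.
  - replace b with (b * / c * c) by (field; lra). rewrite (Rmult_comm c a).
    apply Rmult_le_compat_r; lra.
Qed.

Lemma exp_le_exp x y : x <= y -> exp x <= exp y.
Proof. intros [h|h]; [left; apply exp_increasing; auto | subst; lra]. Qed.

Lemma ln_le_ln x y : 0 < x -> x <= y -> ln x <= ln y.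
Proof. intros h [h'|h']; [left; apply ln_increasing; auto | subst; lra]. Qed.

Lemma exp_pow x n : exp x ^ n = exp (INR n * x).
Proof.
  induction n; simpl pow; [rewrite Rmult_0_l, exp_0; auto|].
  rewrite IHn, <- exp_plus, S_INR. f_equal. ring.
Qed.

Lemma sum_f_R0_nonneg (f : nat -> R) N :
  (forall j, (j <= N)%nat -> 0 <= f j) -> 0 <= sum_f_R0 f N.
Proof.
  intros H. induction N; simpl; [apply H; lia|].
  assert (0 <= f (S N)) by (apply H; lia).
  assert (0 <= sum_f_R0 f N) by (apply IHN; intros; apply H; lia). lra.
Qed.

Lemma sum_f_R0_affine (p v : nat -> R) e N :
  sum_f_R0 (fun j => p j * (1 - v j + v j * e)) N
  = sum_f_R0 p N - sum_f_R0 (fun j => p j * v j) N + sum_f_R0 (fun j => p j * v j) N * e.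
Proof. induction N; simpl; [ring|]. rewrite IHN. ring. Qed.

Lemma nat_ceiling_exists N x : 0 <= x <= INR N ->
  exists j, (j <= N)%nat /\ INR j - 1 < x <= INR j.
Proof.
  revert x; induction N; intros x [h1 h2].
  - exists O. simpl in *. split; [lia | lra].
  - destruct (Rle_dec x (INR N)) as [h|h].
    + destruct (IHN x) as [j [hj1 hj2]]; [lra|]. exists j; split; [lia | auto].
    + exists (S N). rewrite S_INR in *. split; [lia | lra].
Qed.

Lemma nat_ceiling_pos x : 0 < x -> exists u : nat, (1 <= u)%nat /\ x <= INR u <= x + 1.
Proof.
  intros hx. destruct (INR_unbounded x) as [N hN].
  destruct (nat_ceiling_exists N x) as [j [hj1 hj2]]; [lra|].
  exists j. split; [|lra]. destruct j; [simpl in hj2; lra | lia].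
Qed.

(** * Grid discretisation *)

Definition in_cell (M : nat) (y : R) (j : nat) : Prop := INR j - 1 < INR M * y <= INR j.

Lemma in_cell_exists M y : 0 <= y <= 1 -> exists j, (j <= M)%nat /\ in_cell M y j.
Proof. intros h. apply nat_ceiling_exists. pose proof (pos_INR M). split; nra. Qed.

Lemma in_cell_unique M y j k : in_cell M y j -> in_cell M y k -> j = k.
Proof.
  unfold in_cell; intros h1 h2.
  destruct (lt_eq_lt_dec j k) as [[h|h]|h]; auto; exfalso.
  - assert (INR (S j) <= INR k) by (apply le_INR; lia). rewrite S_INR in *. lra.
  - assert (INR (S k) <= INR j) by (apply le_INR; lia). rewrite S_INR in *. lra.
Qed.

Lemma in_cell_le M y j : y <= 1 -> in_cell M y j -> (j <= M)%nat.
Proof.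
  unfold in_cell; intros hy h. pose proof (pos_INR M).
  assert (INR j < INR (S M)) by (rewrite S_INR; nra). apply INR_lt in H0. lia.
Qed.

Lemma in_cell_iff M y j : (1 <= M)%nat ->
  (in_cell M y j <-> (INR j - 1) / INR M < y <= INR j / INR M).
Proof.
  intros hM. assert (hMp : 0 < INR M) by (apply lt_0_INR; lia).
  unfold in_cell. rewrite <- Rmult_le_div_iff by auto.
  assert (INR j - 1 < INR M * y <-> (INR j - 1) / INR M < y).
  { split; intros h; apply Rnot_le_lt; intros h'.
    - apply Rmult_le_div_iff in h'; auto. lra.
    - apply Rmult_le_div_iff in h'; auto; lra. }
  tauto.
Qed.

Definition cell_mass (G : R -> R) (M j : nat) : R := G (INR j / INR M) - G ((INR j - 1) / INR M).

Lemma weighted_mean_bounds (p v : nat -> R) M :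
  (forall j, (j <= M)%nat -> 0 <= p j) -> sum_f_R0 p M = 1 ->
  (forall j, (j <= M)%nat -> 0 <= v j <= 1) -> 0 <= sum_f_R0 (fun j => p j * v j) M <= 1.
Proof.
  intros hp hs hv. rewrite <- hs. split.
  - apply sum_f_R0_nonneg. intros j hj. specialize (hv j hj). specialize (hp j hj). nra.
  - apply sum_Rle. intros j hj. specialize (hv j hj). specialize (hp j hj). nra.
Qed.

(* End points of cell [j]; the left one is clipped at 0 for [j = 0]. *)
Definition grid_up (M j : nat) : R := INR j / INR M.
Definition grid_down (M j : nat) : R := INR (pred j) / INR M.

Lemma grid_point_range M k : (1 <= M)%nat -> (k <= M)%nat -> 0 <= INR k / INR M <= 1.
Proof.
  intros hM hk. assert (hMp : 0 < INR M) by (apply lt_0_INR; lia).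
  assert (INR k <= INR M) by (apply le_INR; auto). pose proof (pos_INR k).
  unfold Rdiv. split; [apply Rmult_le_pos; [lra | left; apply Rinv_0_lt_compat; lra]|].
  rewrite <- (Rinv_r (INR M)) by lra.
  apply Rmult_le_compat_r; [left; apply Rinv_0_lt_compat|]; lra.
Qed.

Lemma grid_up_range M j : (1 <= M)%nat -> (j <= M)%nat -> 0 <= grid_up M j <= 1.
Proof. apply grid_point_range. Qed.

Lemma grid_down_range M j : (1 <= M)%nat -> (j <= M)%nat -> 0 <= grid_down M j <= 1.
Proof. intros. apply grid_point_range; auto; lia. Qed.

Lemma in_cell_grid M y j : (1 <= M)%nat -> 0 <= y -> in_cell M y j ->
  grid_down M j <= y <= grid_up M j.
Proof.
  intros hM hy h. assert (hMp : 0 < INR M) by (apply lt_0_INR; lia).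
  unfold in_cell, grid_down, grid_up in *. split; [|apply Rmult_le_div_iff; lra].
  destruct j as [|j]; [simpl; unfold Rdiv; rewrite Rmult_0_l; lra|].
  simpl pred. rewrite S_INR in h. apply Rnot_lt_le. intros hc.
  assert (INR M * y <= INR j) by (apply Rmult_le_div_iff; lra). lra.
Qed.

Lemma sum_f_R0_telescope (a : nat -> R) n :
  sum_f_R0 (fun j => a j - match j with O => 0 | S j' => a j' end) n = a n.
Proof. induction n; simpl in *; [ring|]. rewrite IHn. ring. Qed.

Lemma abel_summation (a b : nat -> R) n : (forall j, b (S j) = a j) ->
  sum_f_R0 (fun j => INR j * (a j - b j)) (S n) = INR (S n) * a (S n) - sum_f_R0 a n.
Proof.
  intros Hb. induction n; [simpl; rewrite Hb; ring|].
  rewrite tech5, IHn, Hb, (tech5 a n), !S_INR. ring.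
Qed.

(** * The exploration rate *)

Definition exploration_rate (t : R) : R := ln t + 3 * ln (ln t).

Lemma ln_ge_1 x : 3 <= x -> 1 <= ln x.
Proof.
  intros h. rewrite <- (ln_exp 1). apply ln_le_ln; [apply exp_pos|]. pose proof exp_le_3. lra.
Qed.

Lemma exploration_rate_mono x y : 3 <= x -> x <= y -> 0 <= exploration_rate x <= exploration_rate y.
Proof.
  intros hx hy. unfold exploration_rate.
  pose proof (ln_ge_1 x hx). pose proof (ln_ge_1 y ltac:(lra)).
  assert (0 <= ln (ln x)) by (rewrite <- ln_1; apply ln_le_ln; lra).
  assert (ln x <= ln y) by (apply ln_le_ln; lra).
  assert (ln (ln x) <= ln (ln y)) by (apply ln_le_ln; lra).
  lra.
Qed.

Lemma exploration_rate_pos x : 3 <= x -> 0 < exploration_rate x.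
Proof.
  intros hx. unfold exploration_rate. pose proof (ln_ge_1 _ hx).
  assert (0 <= ln (ln x)) by (rewrite <- ln_1; apply ln_le_ln; lra). lra.
Qed.

Lemma ln_unbounded_nat c : exists T : nat, (1 <= T)%nat /\ c <= ln (INR T).
Proof.
  destruct (INR_unbounded (exp c)) as [T HT]. exists (S T). split; [lia|].
  rewrite <- (ln_exp c). apply ln_le_ln; [apply exp_pos|]. rewrite S_INR. lra.
Qed.

Lemma sample_size_exists f g : 0 < f -> 0 < g ->
  exists u : nat, (1 <= u)%nat /\ f / (2 * INR u) <= g ^ 2 /\ INR u <= f / (2 * g ^ 2) + 1.
Proof.
  intros hf hg. assert (hg2 : 0 < 2 * g ^ 2) by nra.
  destruct (nat_ceiling_pos (f / (2 * g ^ 2))) as [u [Hu1 [Hu2 Hu3]]];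
    [apply Rdiv_lt_0_compat; auto|].
  exists u. split; [auto | split; auto].
  assert (0 < INR u) by (apply lt_0_INR; lia).
  assert (f <= INR u * (2 * g ^ 2)).
  { replace f with (f / (2 * g ^ 2) * (2 * g ^ 2)) by (field; lra).
    apply Rmult_le_compat_r; lra. }
  apply (Rmult_le_reg_r (2 * INR u)); [lra|].
  unfold Rdiv. rewrite Rmult_assoc, Rinv_l by lra. nra.
Qed.

Lemma geometric_sum_le q n : 0 <= q < 1 -> sum_f_R0 (fun i => q ^ i) n <= / (1 - q).
Proof.
  intros h. rewrite tech3 by lra. unfold Rdiv.
  rewrite <- (Rmult_1_l (/ (1 - q))) at 2.
  apply Rmult_le_compat_r; [left; apply Rinv_0_lt_compat; lra|].
  assert (0 <= q ^ S n) by (apply pow_le; lra). lra.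
Qed.

Lemma exp_neg_exploration_rate x : 3 <= x -> exp (- exploration_rate x) <= / (x * ln x).
Proof.
  intros hx. unfold exploration_rate. pose proof (ln_ge_1 x hx).
  replace (- (ln x + 3 * ln (ln x))) with (- ln x + - (ln (ln x) + ln (ln x) + ln (ln x))) by ring.
  rewrite exp_plus, !exp_Ropp, !exp_plus, !exp_ln by lra.
  rewrite <- Rinv_mult. apply Rinv_le_contravar; [nra|].
  assert (ln x <= ln x * ln x * ln x) by nra. apply Rmult_le_compat_l; lra.
Qed.

Lemma inv_le_ln_succ_diff x : 1 <= x -> / (x + 1) <= ln (x + 1) - ln x.
Proof.
  intros hx. set (z := x / (x + 1)).
  assert (hz : 0 < z) by (unfold z; apply Rdiv_lt_0_compat; lra).
  replace x with (z * (x + 1)) at 3 by (unfold z; field; lra).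
  rewrite ln_mult by lra.
  assert (h := exp_ineq1_le (ln z)). rewrite exp_ln in h by auto.
  assert (1 - z = / (x + 1)) by (unfold z; field; lra). lra.
Qed.

Lemma harmonic_sum_le n : (1 <= n)%nat ->
  sum_f_R0 (fun t => if Nat.leb 1 t then / INR t else 0) n <= 1 + ln (INR n).
Proof.
  intros h. induction h; [simpl; rewrite ln_1; lra|].
  rewrite tech5. replace (Nat.leb 1 (S m)) with true by (symmetry; apply Nat.leb_le; lia).
  assert (1 <= INR m) by (apply (le_INR 1); auto).
  pose proof (inv_le_ln_succ_diff (INR m) H). rewrite S_INR. lra.
Qed.

Lemma indicator_sum_le T n : sum_f_R0 (fun t => if Nat.ltb t T then 1 else 0) n <= INR T.
Proof.
  assert (E : forall n, sum_f_R0 (fun t => if Nat.ltb t T then 1 else 0) n = INR (Nat.min (S n) T)).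
  { induction n0; [destruct T; reflexivity|].
    rewrite tech5, IHn0. destruct (Nat.ltb_spec (S n0) T).
    - replace (Nat.min (S (S n0)) T) with (S (Nat.min (S n0) T)) by lia. rewrite S_INR. auto.
    - replace (Nat.min (S (S n0)) T) with (Nat.min (S n0) T) by lia. ring. }
  rewrite E. apply le_INR. lia.
Qed.

(* [exp (- exploration_rate t) <= 1 / (t ln t)] makes the terms with [t >= T0] at most [eta / t];
   the earlier ones are bounded by [C] each. *)
Lemma exp_neg_exploration_rate_split C eta T0 t : 0 <= C -> 0 < eta -> C / eta <= ln (INR T0) ->
  (1 <= T0)%nat -> (3 <= t)%nat ->
  C * exp (- exploration_rate (INR t)) <= C * (if Nat.ltb t T0 then 1 else 0) + eta * / INR t.
Proof.
  intros hC he hT hT0 ht3.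
  assert (ht : 3 <= INR t) by (replace 3 with (INR 3) by (simpl; ring); apply le_INR; auto).
  pose proof (exp_neg_exploration_rate (INR t) ht) as he2. pose proof (ln_ge_1 (INR t) ht) as hl.
  assert (0 < / (INR t * ln (INR t))) by (apply Rinv_0_lt_compat; nra).
  assert (0 <= eta * / INR t) by (apply Rmult_le_pos; [lra | left; apply Rinv_0_lt_compat; lra]).
  destruct (Nat.ltb_spec t T0) as [h2|h2].
  - assert (/ (INR t * ln (INR t)) <= 1) by (rewrite <- Rinv_1; apply Rinv_le_contravar; nra).
    nra.
  - assert (C <= eta * ln (INR t)).
    { assert (ln (INR T0) <= ln (INR t)) by (apply ln_le_ln; [apply lt_0_INR | apply le_INR]; lia).
      apply (Rmult_le_reg_r (/ eta)); [apply Rinv_0_lt_compat; lra|].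
      replace (eta * ln (INR t) * / eta) with (ln (INR t)) by (field; lra).
      unfold Rdiv in hT. lra. }
    assert (C * / (INR t * ln (INR t)) <= eta * / INR t).
    { replace (C * / (INR t * ln (INR t))) with (C / ln (INR t) * / INR t) by (field; split; lra).
      apply Rmult_le_compat_r; [left; apply Rinv_0_lt_compat; lra|].
      apply (Rmult_le_reg_r (ln (INR t))); [lra|].
      unfold Rdiv. rewrite Rmult_assoc, Rinv_l by lra. lra. }
    assert (C * exp (- exploration_rate (INR t)) <= C * / (INR t * ln (INR t)))
      by (apply Rmult_le_compat_l; auto).
    lra.
Qed.

Lemma sum_exp_neg_exploration_rate_le (b : nat -> R) C eta T0 n :
  0 <= C -> 0 < eta -> C / eta <= ln (INR T0) -> (1 <= n)%nat -> (1 <= T0)%nat ->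
  (forall t, b t <= if Nat.leb 3 t then C * exp (- exploration_rate (INR t)) else 0) ->
  sum_f_R0 b n <= C * INR T0 + eta * (1 + ln (INR n)).
Proof.
  intros hC he hT hn hT0 hb.
  eapply Rle_trans.
  { apply (sum_Rle b (fun t => (if Nat.ltb t T0 then 1 else 0) * C
                                 + (if Nat.leb 1 t then / INR t else 0) * eta)).
    intros t _. eapply Rle_trans; [apply hb|]. destruct (Nat.leb_spec 3 t) as [h|h].
    - replace (Nat.leb 1 t) with true by (symmetry; apply Nat.leb_le; lia).
      rewrite (Rmult_comm _ C), (Rmult_comm _ eta). apply exp_neg_exploration_rate_split; auto.
    - assert (0 <= C * (if Nat.ltb t T0 then 1 else 0)) by (destruct Nat.ltb; lra).
      assert (0 <= eta * (if Nat.leb 1 t then / INR t else 0)).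
      { destruct (Nat.leb_spec 1 t); [|lra]. apply Rmult_le_pos; [lra|].
        left; apply Rinv_0_lt_compat, lt_0_INR; lia. }
      lra. }
  rewrite sum_plus, <- !scal_sum.
  pose proof (indicator_sum_le T0 n). pose proof (harmonic_sum_le n hn).
  apply Rplus_le_compat; apply Rmult_le_compat_l; lra.
Qed.

(** * Sums over tuples and Hoeffding's lemma *)

Fixpoint sum_tuples (M n : nat) (h : list nat -> R) : R :=
  match n with
  | O => h nil
  | S n' => sum_f_R0 (fun j => sum_tuples M n' (fun k => h (j :: k))) M
  end.

Lemma sum_tuples_le M n : forall h h', (forall k, h k <= h' k) ->
  sum_tuples M n h <= sum_tuples M n h'.
Proof. induction n; intros h h' H; simpl; auto. apply sum_Rle. intros; apply IHn; auto. Qed.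

Lemma sum_tuples_ext M n : forall h h', (forall k, length k = n -> h k = h' k) ->
  sum_tuples M n h = sum_tuples M n h'.
Proof.
  induction n; intros h h' H; simpl; [apply H; auto|].
  apply sum_eq. intros i _. apply IHn. intros k hk. apply H. simpl; lia.
Qed.

Lemma sum_tuples_scal M n : forall a h, sum_tuples M n (fun k => a * h k) = a * sum_tuples M n h.
Proof.
  induction n; intros a h; simpl; auto. rewrite scal_sum. apply sum_eq. intros i _.
  rewrite (IHn a (fun k => h (i :: k))). ring.
Qed.

Fixpoint prod_list (phi : nat -> R) (k : list nat) : R :=
  match k with nil => 1 | j :: k' => phi j * prod_list phi k' end.

Fixpoint sum_list (v : nat -> R) (k : list nat) : R :=
  match k with nil => 0 | j :: k' => v j + sum_list v k' end.

Lemma prod_list_mult f g k : prod_list f k * prod_list g k = prod_list (fun j => f j * g j) k.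
Proof. induction k; simpl; [ring|]. rewrite <- IHk. ring. Qed.

Lemma exp_sum_list th v c0 k :
  exp (th * (sum_list v k - c0)) = exp (- th * c0) * prod_list (fun j => exp (th * v j)) k.
Proof.
  induction k; simpl; [rewrite Rmult_1_r; f_equal; ring|].
  replace (th * (v a + sum_list v k - c0)) with (th * v a + th * (sum_list v k - c0)) by ring.
  rewrite exp_plus, IHk. ring.
Qed.

Lemma sum_tuples_prod_list M n : forall phi,
  sum_tuples M n (prod_list phi) = (sum_f_R0 phi M) ^ n.
Proof.
  induction n; intros phi; simpl; auto.
  rewrite Rmult_comm, scal_sum. apply sum_eq. intros i _.
  rewrite <- IHn, <- sum_tuples_scal. apply sum_tuples_ext. intros k _; simpl; ring.
Qed.

Lemma exp_convex th v : 0 <= v <= 1 -> exp (th * v) <= 1 - v + v * exp th.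
Proof.
  intros hv.
  assert (h1 := exp_ineq1_le (- th * v)). assert (h2 := exp_ineq1_le (th * (1 - v))).
  assert (e1 : exp (th * v) * exp (- th * v) = 1)
    by (rewrite <- exp_plus, <- exp_0; f_equal; ring).
  assert (e2 : exp (th * v) * exp (th * (1 - v)) = exp th)
    by (rewrite <- exp_plus; f_equal; ring).
  assert (hp := exp_pos (th * v)).
  assert ((1 - v) * exp (- th * v) + v * exp (th * (1 - v)) >= 1) by nra.
  nra.
Qed.

Lemma mul_nonneg_of_deriv_nonneg f f' :
  (forall x, derivable_pt_lim f x (f' x)) -> f 0 = 0 -> (forall x, 0 <= f' x) ->
  forall t, 0 <= t * f t.
Proof.
  intros Hd H0 Hpos t. destruct (Rtotal_order t 0) as [h|[h|h]].
  - destruct (MVT_cor2 f f' t 0 h) as [d [e _]]; [intros; apply Hd|].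
    specialize (Hpos d). nra.
  - subst. lra.
  - destruct (MVT_cor2 f f' 0 t h) as [d [e _]]; [intros; apply Hd|].
    specialize (Hpos d). nra.
Qed.

Lemma nonneg_of_deriv_sign f f' :
  (forall x, derivable_pt_lim f x (f' x)) -> f 0 = 0 -> (forall x, 0 <= x * f' x) ->
  forall t, 0 <= f t.
Proof.
  intros Hd H0 Hsign t. destruct (Rtotal_order t 0) as [h|[h|h]].
  - destruct (MVT_cor2 f f' t 0 h) as [d [e hd]]; [intros; apply Hd|].
    specialize (Hsign d). assert (f' d <= 0) by nra. nra.
  - subst. lra.
  - destruct (MVT_cor2 f f' 0 t h) as [d [e hd]]; [intros; apply Hd|].
    specialize (Hsign d). assert (0 <= f' d) by nra. nra.
Qed.

Section HoeffdingLemma.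
Import Coquelicot.

Variable m : R.
Hypothesis hm : 0 <= m <= 1.

(* [gap t = t m + t^2/8 - ln (1 - m + m e^t)]: it vanishes with its derivative at 0,
   and its second derivative [1/4 - q (1 - q)] (with [q = m e^t / D t]) is nonnegative. *)
Let D t := 1 - m + m * exp t.
Let q t := m * exp t / D t.
Let gap t := t * m + t * t / 8 - ln (D t).
Let gap' t := m + t / 4 - q t.
Let gap'' t := 1 / 4 - q t * (1 - q t).

Let D_pos t : 0 < D t.
Proof. unfold D. pose proof (exp_pos t). destruct (Rle_dec m (1/2)); nra. Qed.

Let derive_gap t : derivable_pt_lim gap t (gap' t).
Proof.
  apply is_derive_Reals. pose proof (D_pos t). unfold gap, gap', q, D in *.
  auto_derive; [lra|]. field. lra.
Qed.

Let derive_gap' t : derivable_pt_lim gap' t (gap'' t).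
Proof.
  apply is_derive_Reals. pose proof (D_pos t). unfold gap', gap'', q, D in *.
  auto_derive; [lra|]. field. lra.
Qed.

Lemma hoeffding_lemma th : 1 - m + m * exp th <= exp (th * m + th ^ 2 / 8).
Proof.
  assert (HD0 : D 0 = 1) by (unfold D; rewrite exp_0; ring).
  assert (Hgap' : forall x, 0 <= x * gap' x).
  { apply (mul_nonneg_of_deriv_nonneg gap' gap'' derive_gap').
    - unfold gap', q. rewrite HD0, exp_0. field.
    - intros x. unfold gap''. pose proof (pow2_ge_0 (q x - 1/2)). nra. }
  assert (Hgap : 0 <= gap th).
  { apply (nonneg_of_deriv_sign gap gap' derive_gap); auto.
    unfold gap. rewrite HD0, ln_1. field. }
  rewrite <- (exp_ln (1 - m + m * exp th)) by apply D_pos.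
  apply exp_le_exp. unfold gap, D in Hgap. simpl. lra.
Qed.

End HoeffdingLemma.

(** * Probability on an abstract probability space *)

Section ProbabilitySpace.

Context {Omega : Type} {F : (Omega -> Prop) -> Prop} {P : (Omega -> Prop) -> R}.
Context (HP : prob_space Omega F P).

Lemma event_ext (E E' : Omega -> Prop) : (forall w, E w <-> E' w) -> E = E'.
Proof.
  intros H. apply functional_extensionality. intros w.
  apply propositional_extensionality. apply H.
Qed.

Lemma P_ext (E E' : Omega -> Prop) : (forall w, E w <-> E' w) -> P E = P E'.
Proof. intros H. now rewrite (event_ext E E' H). Qed.

Lemma F_ext (E E' : Omega -> Prop) : (forall w, E w <-> E' w) -> F E -> F E'.
Proof. intros H. now rewrite (event_ext E E' H). Qed.

Lemma F_true : F (fun _ => True).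
Proof. apply (ps_full _ _ _ HP). Qed.

Lemma F_not E : F E -> F (fun w => ~ E w).
Proof. apply (ps_compl _ _ _ HP). Qed.

Lemma F_false : F (fun _ => False).
Proof. apply (F_ext (fun w => ~ True)); [tauto|]. apply F_not, F_true. Qed.

Lemma F_const (Q : Prop) : F (fun _ => Q).
Proof.
  destruct (classic Q).
  - apply (F_ext (fun _ => True)); [tauto|]. apply F_true.
  - apply (F_ext (fun _ => False)); [tauto|]. apply F_false.
Qed.

Lemma F_exists (E : nat -> Omega -> Prop) :
  (forall n, F (E n)) -> F (fun w => exists n, E n w).
Proof. apply (ps_union _ _ _ HP). Qed.

Lemma F_or E1 E2 : F E1 -> F E2 -> F (fun w => E1 w \/ E2 w).
Proof.
  intros H1 H2.
  apply (F_ext (fun w => exists n, (match n with O => E1 | _ => E2 end) w)).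
  { intros w; split.
    - intros [[|n] H]; auto.
    - intros [H|H]; [exists O | exists 1%nat]; auto. }
  apply F_exists. intros [|n]; auto.
Qed.

Lemma F_and E1 E2 : F E1 -> F E2 -> F (fun w => E1 w /\ E2 w).
Proof.
  intros H1 H2. apply (F_ext (fun w => ~ (~ E1 w \/ ~ E2 w))); [intros; tauto|].
  apply F_not, F_or; apply F_not; auto.
Qed.

Lemma F_exists_le (E : nat -> Omega -> Prop) N :
  (forall n, (n <= N)%nat -> F (E n)) -> F (fun w => exists n, (n <= N)%nat /\ E n w).
Proof.
  intros H. apply F_exists. intros n. destruct (le_lt_dec n N) as [h|h].
  - apply (F_ext (E n)); [intros; tauto | auto].
  - apply (F_ext (fun _ => False)); [intros; lia | apply F_false].
Qed.

Lemma F_Forall {T} (E : T -> Omega -> Prop) l :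
  (forall x, In x l -> F (E x)) -> F (fun w => Forall (fun x => E x w) l).
Proof.
  induction l as [|x l IH]; intros H.
  - apply (F_ext (fun _ => True)); [split; auto | apply F_true].
  - apply (F_ext (fun w => E x w /\ Forall (fun x => E x w) l)).
    { intros w; rewrite Forall_cons_iff; tauto. }
    apply F_and; [apply H; simpl; auto | apply IH; intros; apply H; simpl; auto].
Qed.

Lemma P_nonneg E : F E -> 0 <= P E.
Proof. apply (ps_nonneg _ _ _ HP). Qed.

Lemma P_false : P (fun _ => False) = 0.
Proof.
  pose proof (ps_additive _ _ _ HP (fun _ _ => False) (fun _ => F_false)
    (fun _ _ _ _ h _ => h)) as H; cbv beta in H.
  rewrite (P_ext (fun _ => exists n : nat, False) (fun _ => False)) in H
    by (intros; firstorder).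
  set (x := P (fun _ => False)) in *.
  assert (Hx : 0 <= x) by (apply P_nonneg, F_false).
  (* the constant series [x, x, ...] converges only if x = 0 *)
  destruct (Req_dec x 0) as [e|ne]; auto.
  destruct (H (x / 2)) as [N HN]; [lra|].
  specialize (HN (S N) ltac:(lia)).
  assert (Hsum : forall n, sum_f_R0 (fun _ => x) n = INR (S n) * x).
  { induction n; simpl sum_f_R0; [simpl; lra|]. rewrite IHn, (S_INR (S n)). lra. }
  rewrite Hsum in HN. unfold R_dist in HN. rewrite !S_INR in HN.
  pose proof (pos_INR N). rewrite Rabs_right in HN by nra. nra.
Qed.

Lemma P_total : P (fun _ => True) = 1.
Proof. apply (ps_total _ _ _ HP). Qed.

Lemma P_disjoint_or E1 E2 : F E1 -> F E2 -> (forall w, E1 w -> E2 w -> False) ->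
  P (fun w => E1 w \/ E2 w) = P E1 + P E2.
Proof.
  intros H1 H2 Hd.
  set (E := fun n : nat => match n with O => E1 | 1%nat => E2 | _ => fun _ => False end).
  assert (Hs : infinite_sum (fun n => P (E n)) (P (fun w => exists n, E n w))).
  { apply (ps_additive _ _ _ HP).
    - intros [|[|n]]; simpl; auto. apply F_false.
    - intros [|[|m]] [|[|n]] w hmn; simpl; try tauto; try lia; eauto. }
  rewrite (P_ext _ (fun w => E1 w \/ E2 w)) in Hs.
  2:{ intros w; split.
      - intros [[|[|n]] h]; simpl in h; tauto.
      - intros [h|h]; [exists O | exists 1%nat]; auto. }
  apply (uniqueness_sum (fun n => P (E n))); auto.
  intros eps Heps. exists 1%nat. intros n Hn.
  assert (Hpart : forall n, (1 <= n)%nat -> sum_f_R0 (fun n => P (E n)) n = P E1 + P E2).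
  { induction n0; intros h; [lia|]. destruct n0; [reflexivity|].
    simpl sum_f_R0 in *. rewrite IHn0 by lia. simpl. rewrite P_false. lra. }
  rewrite Hpart by auto. unfold R_dist. rewrite Rminus_diag, Rabs_R0; auto.
Qed.

Lemma P_split E1 E2 : F E1 -> F E2 ->
  P E1 = P (fun w => E1 w /\ E2 w) + P (fun w => E1 w /\ ~ E2 w).
Proof.
  intros. rewrite <- P_disjoint_or.
  - apply P_ext. intros w. destruct (classic (E2 w)); tauto.
  - apply F_and; auto.
  - apply F_and; auto. apply F_not; auto.
  - intros w; tauto.
Qed.

Lemma P_mono E1 E2 : F E1 -> F E2 -> (forall w, E1 w -> E2 w) -> P E1 <= P E2.
Proof.
  intros H1 H2 H. rewrite (P_split E2 E1); auto.
  rewrite (P_ext (fun w => E2 w /\ E1 w) E1) by (intros w; split; [tauto | auto]).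
  assert (0 <= P (fun w => E2 w /\ ~ E1 w)) by (apply P_nonneg, F_and, F_not; auto).
  lra.
Qed.

Lemma P_le_1 E : F E -> P E <= 1.
Proof. intros. rewrite <- P_total. apply P_mono; auto. apply F_true. Qed.

Lemma P_or_le E1 E2 : F E1 -> F E2 -> P (fun w => E1 w \/ E2 w) <= P E1 + P E2.
Proof.
  intros H1 H2.
  rewrite (P_ext _ (fun w => E1 w \/ (E2 w /\ ~ E1 w))) by (intros w; tauto).
  assert (HF : F (fun w => E2 w /\ ~ E1 w)) by (apply F_and, F_not; auto).
  rewrite P_disjoint_or by (auto; intros; tauto).
  assert (P (fun w => E2 w /\ ~ E1 w) <= P E2) by (apply P_mono; auto; intros; tauto).
  lra.
Qed.

Lemma P_union_bound (E : nat -> Omega -> Prop) N : (forall n, F (E n)) ->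
  P (fun w => exists n, (n <= N)%nat /\ E n w) <= sum_f_R0 (fun n => P (E n)) N.
Proof.
  intros HE. induction N.
  - right. apply P_ext. intros w; split.
    + intros [n [h1 h2]]. now replace n with O in h2 by lia.
    + intros h. exists O; auto.
  - simpl. rewrite (P_ext _ (fun w => (exists n, (n <= N)%nat /\ E n w) \/ E (S N) w)).
    2:{ intros w; split.
        - intros [n [h1 h2]]. destruct (Nat.eq_dec n (S N)); [subst; auto|].
          left; exists n; split; auto; lia.
        - intros [[n [h1 h2]]|h]; [exists n | exists (S N)]; auto. }
    eapply Rle_trans; [apply P_or_le; auto; apply F_exists_le; auto | lra].
Qed.

Lemma P_partition (Q : Omega -> Prop) (E : nat -> Omega -> Prop) N :
  F Q -> (forall n, F (E n)) ->
  (forall m n w, m <> n -> E m w -> E n w -> False) ->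
  P (fun w => Q w /\ exists n, (n <= N)%nat /\ E n w)
  = sum_f_R0 (fun n => P (fun w => Q w /\ E n w)) N.
Proof.
  intros HQ HE Hd. induction N.
  - apply P_ext. intros w; split.
    + intros [h [n [h1 h2]]]. replace n with O in h2 by lia; auto.
    + intros [h1 h2]. split; auto. exists O; auto.
  - simpl. rewrite <- IHN.
    rewrite (P_ext _ (fun w => (Q w /\ exists n, (n <= N)%nat /\ E n w) \/ (Q w /\ E (S N) w))).
    2:{ intros w; split.
        - intros [hq [n [h1 h2]]]. destruct (Nat.eq_dec n (S N)); [subst; auto|].
          left; split; auto; exists n; split; auto; lia.
        - intros [[hq [n [h1 h2]]]|[hq h]]; split; auto; [exists n | exists (S N)]; auto. }
    apply P_disjoint_or.
    + apply F_and; auto. apply F_exists_le; auto.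
    + apply F_and; auto.
    + intros w [_ [n [h1 h2]]] [_ h3]. apply (Hd n (S N) w); auto. lia.
Qed.


Definition nat_measurable (Y : Omega -> nat) := forall k, F (fun w => Y w = k).

Lemma F_nat_ge Y : nat_measurable Y -> forall j, F (fun w => (j <= Y w)%nat).
Proof.
  intros HY j. apply (F_ext (fun w => exists m, (j <= m)%nat /\ Y w = m)).
  { intros w; split; [intros [m [h1 h2]]; lia | intros h; exists (Y w); auto]. }
  apply F_exists. intros m. destruct (le_lt_dec j m).
  - apply (F_ext (fun w => Y w = m)); [intros; tauto | auto].
  - apply (F_ext (fun _ => False)); [intros; lia | apply F_false].
Qed.

(* [tail_sum Y L = sum_{j=1}^L P(Y >= j)], which equals [E Y] when [Y <= L]. *)
Fixpoint tail_sum (Y : Omega -> nat) (L : nat) : R :=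
  match L with
  | O => 0
  | S L' => tail_sum Y L' + P (fun w => (L <= Y w)%nat)
  end.

Lemma tail_sum_mono_L Y : nat_measurable Y ->
  forall L L', (L <= L')%nat -> tail_sum Y L <= tail_sum Y L'.
Proof.
  intros HY L L' h. induction h; simpl; [lra|].
  assert (0 <= P (fun w => (S m <= Y w)%nat)) by (apply P_nonneg, F_nat_ge; auto).
  lra.
Qed.

Lemma tail_sum_stable Y L L' : (forall w, (Y w <= L)%nat) -> (L <= L')%nat ->
  tail_sum Y L' = tail_sum Y L.
Proof.
  intros Hb h. induction h; simpl; auto. rewrite IHh.
  rewrite (P_ext _ (fun _ => False)), P_false; [ring|].
  intros w; split; [|tauto]. specialize (Hb w). lia.
Qed.

Lemma expect_nat_tail_sum Y n : nat_measurable Y ->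
  (forall w, (Y w <= n)%nat) -> expect_nat P n Y = tail_sum Y n.
Proof.
  intros HY Hb.
  assert (G : forall k, expect_nat P k Y = tail_sum Y k - INR k * P (fun w => (S k <= Y w)%nat)).
  { unfold expect_nat. induction k; [simpl; lra|].
    rewrite tech5, IHk. simpl tail_sum.
    assert (H : P (fun w => (S k <= Y w)%nat)
                = P (fun w => Y w = S k) + P (fun w => (S (S k) <= Y w)%nat)).
    { rewrite <- P_disjoint_or; auto.
      - apply P_ext. intros w; lia.
      - apply F_nat_ge; auto.
      - intros; lia. }
    rewrite H, S_INR. ring. }
  rewrite G, (P_ext _ (fun _ => False)), P_false; [ring|].
  intros w; split; [|tauto]. specialize (Hb w). lia.
Qed.

Lemma tail_sum_shift Y Z u : nat_measurable Y -> nat_measurable Z ->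
  (forall w, (Y w <= u + Z w)%nat) -> forall L, tail_sum Y L <= INR u + tail_sum Z L.
Proof.
  intros HY HZ H.
  assert (G : forall L, tail_sum Y L <= INR (Nat.min L u) + tail_sum Z (L - u)).
  { induction L; [simpl; lra|]. cbn [tail_sum]. destruct (le_lt_dec u L) as [h|h].
    - replace (Nat.min (S L) u) with (Nat.min L u) by lia.
      replace (S L - u)%nat with (S (L - u)) by lia. cbn [tail_sum].
      assert (P (fun w => (S L <= Y w)%nat) <= P (fun w => (S (L - u) <= Z w)%nat)).
      { apply P_mono; try apply F_nat_ge; auto. intros w hw; specialize (H w); lia. }
      lra.
    - replace (Nat.min (S L) u) with (S (Nat.min L u)) by lia.
      replace (S L - u)%nat with (L - u)%nat by lia. rewrite S_INR.
      assert (P (fun w => (S L <= Y w)%nat) <= 1) by (apply P_le_1, F_nat_ge; auto).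
      lra. }
  intros L. eapply Rle_trans; [apply G|].
  assert (INR (Nat.min L u) <= INR u) by (apply le_INR; lia).
  assert (tail_sum Z (L - u) <= tail_sum Z L) by (apply tail_sum_mono_L; auto; lia).
  lra.
Qed.

Definition indic (E : Omega -> Prop) (w : Omega) : nat :=
  if excluded_middle_informative (E w) then 1%nat else 0%nat.

Lemma indic_true (E : Omega -> Prop) w : E w -> indic E w = 1%nat.
Proof. unfold indic; destruct excluded_middle_informative; tauto. Qed.

Fixpoint count_below (E : nat -> Omega -> Prop) (m : nat) (w : Omega) : nat :=
  match m with O => O | S m' => (count_below E m' w + indic (E m') w)%nat end.

Lemma count_below_le (E : nat -> Omega -> Prop) m w : (count_below E m w <= m)%nat.
Proof. induction m; simpl; [lia|]. unfold indic. destruct excluded_middle_informative; lia. Qed.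

Lemma count_below_mono (E : nat -> Omega -> Prop) m m' w :
  (m <= m')%nat -> (count_below E m w <= count_below E m' w)%nat.
Proof. intros h; induction h; simpl; lia. Qed.

Lemma nat_measurable_add_indic Z E : nat_measurable Z -> F E ->
  nat_measurable (fun w => (Z w + indic E w)%nat).
Proof.
  intros HZ HE k. unfold indic.
  apply (F_ext (fun w => (Z w = k /\ ~ E w)
                         \/ (E w /\ exists j, (j <= k)%nat /\ (Z w = j /\ S j = k)))).
  { intros w. destruct (excluded_middle_informative (E w)); split; intros h.
    - destruct h as [[_ h]|[_ [j [_ [h1 h2]]]]]; [tauto|lia].
    - right. split; auto. exists (Z w). lia.
    - destruct h as [[h _]|[h _]]; [lia|tauto].
    - left; split; auto. lia. }
  apply F_or; [apply F_and; auto; apply F_not; auto|].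
  apply F_and; auto. apply F_exists_le. intros j _.
  destruct (Nat.eq_dec (S j) k).
  - apply (F_ext (fun w => Z w = j)); [intros; tauto | auto].
  - apply (F_ext (fun _ => False)); [intros; tauto | apply F_false].
Qed.

Lemma nat_measurable_zero : nat_measurable (fun _ => O).
Proof. intros k. apply F_const. Qed.

Lemma nat_measurable_count_below E : (forall i, F (E i)) ->
  forall m, nat_measurable (count_below E m).
Proof.
  intros HE m. induction m; [apply nat_measurable_zero|].
  apply nat_measurable_add_indic; auto.
Qed.

Lemma tail_sum_add_indic Z E L : nat_measurable Z -> F E -> (forall w, (Z w <= L)%nat) ->
  tail_sum (fun w => (Z w + indic E w)%nat) (S L) <= tail_sum Z L + P E.
Proof.
  intros HZ HE Hb.
  set (Ebelow := fun j w => E w /\ exists k, (S k <= j)%nat /\ Z w = k).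
  assert (FEbelow : forall j, F (Ebelow j)).
  { intros j. apply F_and; auto.
    apply (F_ext (fun w => exists k, (k <= j)%nat /\ ((S k <= j)%nat /\ Z w = k))).
    { intros w; split; intros [k hk]; exists k; lia. }
    apply F_exists_le. intros k _. apply F_and; [apply F_const | auto]. }
  assert (G : forall j, tail_sum (fun w => (Z w + indic E w)%nat) j <= tail_sum Z j + P (Ebelow j)).
  { induction j.
    - simpl. rewrite (P_ext _ (fun _ => False)), P_false; [lra|].
      intros w; split; [|tauto]. intros [_ [k [h _]]]; lia.
    - cbn [tail_sum].
      assert (H1 : P (fun w => (S j <= Z w + indic E w)%nat)
                   <= P (fun w => (S j <= Z w)%nat) + P (fun w => E w /\ Z w = j)).
      { eapply Rle_trans; [|apply P_or_le; [apply F_nat_ge; auto | apply F_and; auto]].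
        apply P_mono.
        - apply F_nat_ge, nat_measurable_add_indic; auto.
        - apply F_or; [apply F_nat_ge; auto | apply F_and; auto].
        - intros w. unfold indic. destruct (excluded_middle_informative (E w)); intros h.
          + destruct (Nat.eq_dec (Z w) j); [right | left]; auto; lia.
          + left; lia. }
      assert (H2 : P (Ebelow (S j)) = P (Ebelow j) + P (fun w => E w /\ Z w = j)).
      { rewrite <- P_disjoint_or; auto.
        - apply P_ext. intros w; unfold Ebelow; split.
          + intros [he [k [h1 h2]]]. destruct (Nat.eq_dec k j); [right; subst; auto|].
            left; split; auto; exists k; split; auto; lia.
          + intros [[he [k [h1 h2]]]|[he h]]; split; auto; [exists k | exists j]; split; auto.
        - apply F_and; auto.
        - intros w [_ [k [h1 h2]]] [_ h3]. lia. }
      lra. }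
  eapply Rle_trans; [apply G|]. cbn [tail_sum].
  rewrite (P_ext (fun w => (S L <= Z w)%nat) (fun _ => False)), P_false.
  2:{ intros w; split; [|tauto]. specialize (Hb w); lia. }
  assert (P (Ebelow (S L)) <= P E) by (apply P_mono; auto; intros w h; apply h).
  lra.
Qed.

Fixpoint sum_below (f : nat -> R) (m : nat) : R :=
  match m with O => 0 | S m' => sum_below f m' + f m' end.

Lemma sum_below_sum_f_R0 f n : sum_below f (S n) = sum_f_R0 f n.
Proof. induction n; simpl in *; [ring|]. rewrite IHn. reflexivity. Qed.

Lemma tail_sum_count_below E : (forall i, F (E i)) ->
  forall m, tail_sum (count_below E m) m <= sum_below (fun i => P (E i)) m.
Proof.
  intros HE m. induction m; simpl; [lra|].
  eapply Rle_trans; [apply tail_sum_add_indic|].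
  - apply nat_measurable_count_below; auto.
  - auto.
  - intros; apply count_below_le.
  - lra.
Qed.

Lemma expect_nat_le_count Y n E m u :
  nat_measurable Y -> (forall w, (Y w <= n)%nat) -> (forall i, F (E i)) ->
  (forall w, (Y w <= u + count_below E m w)%nat) ->
  expect_nat P n Y <= INR u + sum_below (fun i => P (E i)) m.
Proof.
  intros HY Hb HE H. rewrite expect_nat_tail_sum by auto.
  assert (HC := nat_measurable_count_below E HE m).
  eapply Rle_trans; [apply (tail_sum_shift Y (count_below E m) u); auto|].
  assert (tail_sum (count_below E m) n <= tail_sum (count_below E m) (n + m))
    by (apply tail_sum_mono_L; auto; lia).
  rewrite (tail_sum_stable _ m (n + m)) in H0 by (auto using count_below_le; lia).
  assert (tail_sum (count_below E m) m <= sum_below (fun i => P (E i)) m)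
    by (apply tail_sum_count_below; auto).
  lra.
Qed.

Definition concat_events (E1 E2 : nat -> Omega -> Prop) m1 (i : nat) : Omega -> Prop :=
  if Nat.ltb i m1 then E1 i else E2 (i - m1)%nat.

Lemma count_below_ext (E E' : nat -> Omega -> Prop) m w :
  (forall i, (i < m)%nat -> (E i w <-> E' i w)) -> count_below E m w = count_below E' m w.
Proof.
  induction m; intros h; simpl; auto.
  rewrite IHm by (intros; apply h; lia). f_equal. unfold indic.
  specialize (h m ltac:(lia)).
  destruct (excluded_middle_informative (E m w)), (excluded_middle_informative (E' m w)); tauto.
Qed.

Lemma sum_below_ext f g m : (forall i, (i < m)%nat -> f i = g i) -> sum_below f m = sum_below g m.
Proof. induction m; intros h; simpl; auto. rewrite IHm, h; auto; intros; apply h; lia. Qed.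

Lemma count_below_concat (E1 E2 : nat -> Omega -> Prop) m1 m2 w :
  count_below (concat_events E1 E2 m1) (m1 + m2) w
  = (count_below E1 m1 w + count_below E2 m2 w)%nat.
Proof.
  induction m2.
  - rewrite !Nat.add_0_r. apply count_below_ext. intros i hi.
    unfold concat_events. rewrite (proj2 (Nat.ltb_lt i m1) hi). tauto.
  - rewrite Nat.add_succ_r. simpl. rewrite IHm2. unfold concat_events at 1.
    rewrite (proj2 (Nat.ltb_ge (m1 + m2) m1)) by lia.
    replace (m1 + m2 - m1)%nat with m2 by lia. lia.
Qed.

Lemma sum_below_concat (E1 E2 : nat -> Omega -> Prop) m1 m2 :
  sum_below (fun i => P (concat_events E1 E2 m1 i)) (m1 + m2)
  = sum_below (fun i => P (E1 i)) m1 + sum_below (fun i => P (E2 i)) m2.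
Proof.
  induction m2.
  - rewrite Nat.add_0_r, Rplus_0_r. apply sum_below_ext. intros i hi.
    unfold concat_events. now rewrite (proj2 (Nat.ltb_lt i m1) hi).
  - rewrite Nat.add_succ_r. simpl. rewrite IHm2. unfold concat_events at 1.
    rewrite (proj2 (Nat.ltb_ge (m1 + m2) m1)) by lia.
    replace (m1 + m2 - m1)%nat with m2 by lia. ring.
Qed.

Lemma expect_nat_le_count2 Y n E1 E2 m1 m2 u :
  nat_measurable Y -> (forall w, (Y w <= n)%nat) ->
  (forall i, F (E1 i)) -> (forall i, F (E2 i)) ->
  (forall w, (Y w <= u + count_below E1 m1 w + count_below E2 m2 w)%nat) ->
  expect_nat P n Y
  <= INR u + sum_below (fun i => P (E1 i)) m1 + sum_below (fun i => P (E2 i)) m2.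
Proof.
  intros HY Hb H1 H2 H. rewrite Rplus_assoc, <- sum_below_concat.
  apply expect_nat_le_count; auto.
  - intros i. unfold concat_events. destruct Nat.ltb; auto.
  - intros w. rewrite count_below_concat. specialize (H w). lia.
Qed.

Lemma F_interval (Y : Omega -> R) a b : measurable_rv F Y -> F (fun w => a < Y w <= b).
Proof.
  intros hY. apply (F_ext (fun w => Y w <= b /\ ~ Y w <= a)); [intros; lra|].
  apply F_and; [apply hY | apply F_not, hY].
Qed.

Lemma F_in_cell (Y : Omega -> R) M j :
  (1 <= M)%nat -> measurable_rv F Y -> F (fun w => in_cell M (Y w) j).
Proof.
  intros hM hY. apply (F_ext (fun w => (INR j - 1) / INR M < Y w <= INR j / INR M)).
  - intros w. rewrite in_cell_iff; tauto.
  - apply F_interval; auto.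
Qed.

Lemma P_interval_and (Y : Omega -> R) E a b : measurable_rv F Y -> F E -> a <= b ->
  P (fun w => a < Y w <= b /\ E w)
  = P (fun w => Y w <= b /\ E w) - P (fun w => Y w <= a /\ E w).
Proof.
  intros hY hE hab.
  rewrite (P_split (fun w => Y w <= b /\ E w) (fun w => Y w <= a)) by (try apply F_and; auto).
  rewrite (P_ext (fun w => (Y w <= b /\ E w) /\ Y w <= a) (fun w => Y w <= a /\ E w))
    by (intros w; split; intros H; decompose [and] H; repeat split; auto; lra).
  rewrite (P_ext (fun w => (Y w <= b /\ E w) /\ ~ Y w <= a) (fun w => a < Y w <= b /\ E w))
    by (intros w; split; intros H; decompose [and] H; repeat split; auto; lra).
  ring.
Qed.

(** * Independence and Chernoff bounds *)

Section Independence.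

Context {I : Type} (Y : I -> Omega -> R) (L : list I).
Hypothesis Hmeas : forall i, In i L -> measurable_rv F (Y i).
Hypothesis Hind : forall l0 c, NoDup l0 -> incl l0 L ->
  P (fun w => Forall (fun i => Y i w <= c i) l0)
  = fold_right Rmult 1 (map (fun i => P (fun w => Y i w <= c i)) l0).

Definition fupdate (c : I -> R) (i : I) (v : R) : I -> R :=
  fun j => if excluded_middle_informative (j = i) then v else c j.

(* A box is a list of triples [(i, a, b)], standing for the constraints [a < Y i <= b]. *)
Definition box_index (t : I * R * R) : I := fst (fst t).

Definition in_box (l : list (I * R * R)) (w : Omega) : Prop :=
  Forall (fun t => snd (fst t) < Y (box_index t) w <= snd t) l.

Definition box_prob (t : I * R * R) : R :=
  P (fun w => Y (box_index t) w <= snd t) - P (fun w => Y (box_index t) w <= snd (fst t)).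

Lemma fupdate_eq (c : I -> R) i v : fupdate c i v i = v.
Proof. unfold fupdate. destruct excluded_middle_informative; tauto. Qed.

Lemma fupdate_notin (c : I -> R) i v l j : ~ In i l -> In j l -> fupdate c i v j = c j.
Proof. intros hi hj. unfold fupdate. destruct excluded_middle_informative; subst; tauto. Qed.

Lemma F_in_box l : (forall t, In t l -> In (box_index t) L) -> F (in_box l).
Proof. intros H. apply F_Forall. intros t ht. apply F_interval, Hmeas, H; auto. Qed.

Lemma P_box_and_upper (l1 : list (I * R * R)) : forall l2 c,
  NoDup (map box_index l1 ++ l2) -> incl (map box_index l1 ++ l2) L ->
  Forall (fun t => snd (fst t) <= snd t) l1 ->
  P (fun w => in_box l1 w /\ Forall (fun i => Y i w <= c i) l2)
  = fold_right Rmult 1 (map box_prob l1)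
    * fold_right Rmult 1 (map (fun i => P (fun w => Y i w <= c i)) l2).
Proof.
  induction l1 as [|[[i a] b] l1 IH]; intros l2 c Hnd Hinc Hab; simpl in *.
  { rewrite Rmult_1_l, <- Hind by auto.
    apply P_ext; intros w; split; [tauto | split; [constructor | auto]]. }
  inversion Hab as [|? ? hab Hab']; subst; simpl in hab.
  set (R0 := fun w => in_box l1 w /\ Forall (fun i => Y i w <= c i) l2).
  assert (HR0 : F R0).
  { apply F_and; [apply F_in_box | apply F_Forall].
    - intros t ht. apply Hinc. right; apply in_or_app; left. apply in_map; auto.
    - intros j hj. apply Hmeas, Hinc. right; apply in_or_app; auto. }
  assert (Hnot : ~ In i l2) by (intros h; inversion Hnd; subst; auto using in_or_app).
  (* move [i] to the list of upper constraints, with threshold [v] *)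
  assert (Hv : forall v, P (fun w => Y i w <= v /\ R0 w)
     = fold_right Rmult 1 (map box_prob l1)
       * (P (fun w => Y i w <= v)
          * fold_right Rmult 1 (map (fun j => P (fun w => Y j w <= c j)) l2))).
  { intros v. specialize (IH (i :: l2) (fupdate c i v)). simpl in IH.
    rewrite fupdate_eq, (map_ext_in _ (fun j => P (fun w => Y j w <= c j)) l2) in IH
      by (intros; rewrite (fupdate_notin c i v l2); auto).
    rewrite <- IH.
    - apply P_ext. intros w. unfold R0. rewrite Forall_cons_iff, fupdate_eq, !Forall_forall.
      assert (forall j, In j l2 -> fupdate c i v j = c j)
        by (intros; apply (fupdate_notin c i v l2); auto).
      split; intros [h1 [h2 h3]]; repeat split; auto; intros x hx;
        [rewrite H | rewrite <- H]; auto.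
    - eapply Permutation_NoDup; [apply Permutation_middle | exact Hnd].
    - intros x hx. apply Hinc.
      apply Permutation_in with (l := map box_index l1 ++ i :: l2); auto.
      apply Permutation_sym, Permutation_middle.
    - auto. }
  rewrite (P_ext _ (fun w => a < Y i w <= b /\ R0 w))
    by (intros w; unfold in_box; rewrite Forall_cons_iff; unfold R0, box_index; simpl; tauto).
  rewrite P_interval_and, !Hv by (auto; apply Hmeas, Hinc; simpl; auto).
  unfold box_prob, box_index. simpl. ring.
Qed.

End Independence.

Section Cells.

Context {I : Type} (Y : I -> Omega -> R) (M : nat) (HM : (1 <= M)%nat).

Fixpoint cells (l : list I) (k : list nat) (w : Omega) : Prop :=
  match l, k with
  | nil, nil => True
  | i :: l', j :: k' => in_cell M (Y i w) j /\ cells l' k' w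
  | _, _ => False
  end.

Lemma cells_unique l : forall k k' w, cells l k w -> cells l k' w -> k = k'.
Proof.
  induction l; intros [|j k] [|j' k'] w; simpl; try tauto.
  intros [h1 h2] [h3 h4]. f_equal; [eapply in_cell_unique | eapply IHl]; eauto.
Qed.

Lemma F_cells l : (forall i, In i l -> measurable_rv F (Y i)) -> forall k, F (cells l k).
Proof.
  induction l as [|i l IH]; intros Hm [|j k]; simpl; try apply F_true; try apply F_false.
  apply F_and; [apply F_in_cell; auto; apply Hm; simpl; auto|].
  apply IH. intros; apply Hm; simpl; auto.
Qed.

Lemma P_sum_cells l : (forall i, In i l -> measurable_rv F (Y i)) ->
  (forall i w, In i l -> 0 <= Y i w <= 1) ->
  forall Q, F Q -> P Q = sum_tuples M (length l) (fun k => P (fun w => Q w /\ cells l k w)).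
Proof.
  induction l as [|i l IH]; intros Hm Hr Q HQ; [apply P_ext; simpl; tauto|].
  assert (Hmi : measurable_rv F (Y i)) by (apply Hm; simpl; auto).
  simpl length. simpl sum_tuples.
  rewrite (P_ext Q (fun w => Q w /\ exists j, (j <= M)%nat /\ in_cell M (Y i w) j)).
  2:{ intros w; split; [|tauto]. intros h; split; auto. apply in_cell_exists, Hr; simpl; auto. }
  rewrite P_partition; auto.
  - apply sum_eq. intros j _.
    rewrite (IH ltac:(intros; apply Hm; simpl; auto) ltac:(intros; apply Hr; simpl; auto)).
    + apply sum_tuples_ext. intros k _. apply P_ext. intros w; simpl; tauto.
    + apply F_and; auto. apply F_in_cell; auto.
  - intros; apply F_in_cell; auto.
  - intros m n w hmn h1 h2. apply hmn. eapply in_cell_unique; eauto.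
Qed.

Definition cells_event (l : list I) (g : list nat -> Prop) (w : Omega) : Prop :=
  exists k, cells l k w /\ g k.

Lemma F_cells_event l : (forall i, In i l -> measurable_rv F (Y i)) ->
  (forall i w, In i l -> 0 <= Y i w <= 1) -> forall g, F (cells_event l g).
Proof.
  induction l as [|i l IH]; intros Hm Hr g.
  - apply (F_ext (fun _ => g nil)); [|apply F_const].
    intros w; split; [intros h; exists nil; simpl; auto|].
    intros [[|j k] [h1 h2]]; simpl in h1; tauto.
  - apply (F_ext (fun w => exists j, (j <= M)%nat /\
             (in_cell M (Y i w) j /\ cells_event l (fun k => g (j :: k)) w))).
    + intros w; split.
      * intros [j [_ [h1 [k [h2 h3]]]]]. exists (j :: k); simpl; auto.
      * intros [[|j k] [h1 h2]]; simpl in h1; try tauto. destruct h1 as [h1 h1'].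
        exists j. split; [eapply in_cell_le; eauto; apply Hr; simpl; auto|].
        split; auto. exists k; auto.
    + apply F_exists_le. intros j _. apply F_and.
      * apply F_in_cell; auto. apply Hm; simpl; auto.
      * apply IH; intros; [apply Hm | apply Hr]; simpl; auto.
Qed.

(* A Markov-type bound: [rho] dominates the indicator of [g]. *)
Lemma P_cells_event_le l g (rho : list nat -> R) :
  (forall i, In i l -> measurable_rv F (Y i)) -> (forall i w, In i l -> 0 <= Y i w <= 1) ->
  (forall k, 0 <= rho k) -> (forall k, g k -> 1 <= rho k) ->
  P (cells_event l g) <= sum_tuples M (length l) (fun k => P (cells l k) * rho k).
Proof.
  intros Hm Hr Hrho Hg. rewrite (P_sum_cells l Hm Hr) by (apply F_cells_event; auto).
  apply sum_tuples_le. intros k.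
  assert (HA : 0 <= P (cells l k)) by (apply P_nonneg, F_cells; auto).
  destruct (classic (g k)) as [h|h].
  - assert (P (fun w => cells_event l g w /\ cells l k w) <= P (cells l k)).
    { apply P_mono; [apply F_and; [apply F_cells_event | apply F_cells]; auto
                    | apply F_cells; auto |].
      intros w [_ h']; auto. }
    specialize (Hg k h). nra.
  - rewrite (P_ext _ (fun _ => False)), P_false; [specialize (Hrho k); nra|].
    intros w; split; [|tauto]. intros [[k' [h1 h2]] h3].
    rewrite (cells_unique l k' k w h1 h3) in h2. tauto.
Qed.

End Cells.

Section Chernoff.

Context {I : Type} (Y : I -> Omega -> R) (L : list I) (M : nat) (HM : (1 <= M)%nat).
Hypothesis Hmeas : forall i, In i L -> measurable_rv F (Y i).
Hypothesis Hrange : forall i w, In i L -> 0 <= Y i w <= 1.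
Hypothesis Hind : forall l0 c, NoDup l0 -> incl l0 L ->
  P (fun w => Forall (fun i => Y i w <= c i) l0)
  = fold_right Rmult 1 (map (fun i => P (fun w => Y i w <= c i)) l0).
Variable G : R -> R.
Hypothesis Hlaw : forall i c, In i L -> P (fun w => Y i w <= c) = G c.

Definition cell_box (l : list I) (k : list nat) : list (I * R * R) :=
  map (fun p => (fst p, (INR (snd p) - 1) / INR M, INR (snd p) / INR M)) (combine l k).

Lemma cell_box_index l : forall k, length l = length k -> map box_index (cell_box l k) = l.
Proof. induction l; intros [|j k] h; simpl in *; try lia; auto. f_equal. apply IHl. lia. Qed.

Lemma cells_in_box l : forall k w, length l = length k ->
  (cells Y M l k w <-> in_box Y (cell_box l k) w).
Proof.
  unfold in_box. induction l; intros [|j k] w h; simpl in *; try lia; [split; auto|].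
  change (cell_box (a :: l) (j :: k))
    with ((a, (INR j - 1) / INR M, INR j / INR M) :: cell_box l k).
  rewrite Forall_cons_iff, <- (IHl k w), in_cell_iff by (auto; lia).
  unfold box_index. simpl. tauto.
Qed.

Lemma cell_box_ordered l k : Forall (fun t => snd (fst t) <= snd t) (cell_box l k).
Proof.
  assert (hM : 0 < INR M) by (apply lt_0_INR; lia).
  unfold cell_box. rewrite Forall_forall. intros t ht.
  apply in_map_iff in ht. destruct ht as [[i j] [<- _]]. simpl.
  unfold Rdiv. apply Rmult_le_compat_r; [left; apply Rinv_0_lt_compat; auto | lra].
Qed.

Lemma P_cells l k : NoDup l -> incl l L -> length l = length k ->
  P (cells Y M l k) = prod_list (cell_mass G M) k.
Proof.
  intros Hnd Hinc Hlen.
  rewrite (P_ext _ (fun w => in_box Y (cell_box l k) w /\ Forall (fun i => Y i w <= 0) nil)).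
  2:{ intros w. rewrite cells_in_box by auto. split; [intros h; split; auto | tauto]. }
  rewrite (P_box_and_upper Y L Hmeas Hind); rewrite ?app_nil_r, ?cell_box_index; auto.
  2: apply cell_box_ordered.
  simpl. rewrite Rmult_1_r. clear Hnd. revert k Hlen.
  induction l; intros [|j k] h; simpl in *; try lia; auto.
  change (map (fun p : I * nat => (fst p, (INR (snd p) - 1) / INR M, INR (snd p) / INR M))
    (combine l k)) with (cell_box l k).
  rewrite IHl by (auto; intros x hx; apply Hinc; simpl; auto).
  unfold box_prob, box_index. simpl. rewrite !Hlaw by (apply Hinc; simpl; auto). auto.
Qed.

(* Exponential Markov inequality, independence of the rewards, and Hoeffding's lemma for the
   mean [m] of the discretised reward. *)
Lemma chernoff_cells (v : nat -> R) th c0 (g : list nat -> Prop) l :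
  (forall j, (j <= M)%nat -> 0 <= cell_mass G M j) -> sum_f_R0 (cell_mass G M) M = 1 ->
  (forall j, (j <= M)%nat -> 0 <= v j <= 1) ->
  (forall k, g k -> th * c0 <= th * sum_list v k) ->
  NoDup l -> incl l L ->
  P (cells_event Y M l g)
  <= exp (- th * c0 + INR (length l)
                      * (th * sum_f_R0 (fun j => cell_mass G M j * v j) M + th ^ 2 / 8)).
Proof.
  intros Hp0 Hp1 Hv Hg Hnd Hinc.
  set (m := sum_f_R0 (fun j => cell_mass G M j * v j) M).
  assert (Hm : 0 <= m <= 1) by (apply weighted_mean_bounds; auto).
  assert (Hmeas_l : forall i, In i l -> measurable_rv F (Y i)) by auto.
  assert (Hrange_l : forall i w, In i l -> 0 <= Y i w <= 1) by auto.
  eapply Rle_trans.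
  { apply (P_cells_event_le Y M HM l g (fun k => exp (th * (sum_list v k - c0))) Hmeas_l Hrange_l).
    - intros; left; apply exp_pos.
    - intros k hk. specialize (Hg k hk). rewrite <- exp_0. apply exp_le_exp. nra. }
  rewrite (sum_tuples_ext M (length l) _
    (fun k => exp (- th * c0) * prod_list (fun j => cell_mass G M j * exp (th * v j)) k)).
  2:{ intros k hk. rewrite P_cells, exp_sum_list, <- prod_list_mult by auto. ring. }
  rewrite sum_tuples_scal, sum_tuples_prod_list, exp_plus, <- exp_pow.
  apply Rmult_le_compat_l; [left; apply exp_pos|].
  apply pow_incr. split.
  - apply sum_f_R0_nonneg. intros j hj. apply Rmult_le_pos; auto. left; apply exp_pos.
  - apply (Rle_trans _ (1 - m + m * exp th)); [|apply hoeffding_lemma; auto].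
    replace (1 - m + m * exp th)
      with (sum_f_R0 (fun j => cell_mass G M j * (1 - v j + v j * exp th)) M).
    + apply sum_Rle. intros j hj. apply Rmult_le_compat_l; auto. apply exp_convex; auto.
    + unfold m. rewrite sum_f_R0_affine, Hp1. ring.
Qed.

End Chernoff.
(** * Grid approximations of the mean *)

Lemma F_lt_const (Y : Omega -> R) a c : measurable_rv F Y -> 0 < a -> F (fun w => a * Y w < c).
Proof.
  intros hY ha.
  apply (F_ext (fun w => exists n, Y w <= (c - / INR (S n)) / a)).
  { intros w; split.
    - intros [n hn]. apply Rmult_le_div_iff in hn; auto.
      assert (0 < / INR (S n)) by (apply Rinv_0_lt_compat, lt_0_INR; lia). lra.
    - intros h. destruct (archimed_cor1 (c - a * Y w)) as [N [h1 h2]]; [lra|].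
      exists (pred N). replace (S (pred N)) with N by lia. apply Rmult_le_div_iff; auto. lra. }
  apply F_exists. intros n. apply hY.
Qed.

Section MeanApproximation.

Context (Y : Omega -> R) (mu : R).
Hypothesis hY : measurable_rv F Y.
Hypothesis hR : forall w, 0 <= Y w <= 1.
Hypothesis hmu : is_mean01 P Y mu.

Definition cdf (c : R) : R := P (fun w => Y w <= c).

(* The approximating sequence in [is_mean01]: the mean of [floor ((N + 1) Y) / (N + 1)]. *)
Definition floor_mean (N : nat) : R :=
  sum_f_R0 (fun k => INR k / INR (S N) * P (fun w => INR k <= INR (S N) * Y w < INR (S k))) (S N).

Definition upper_mean (M : nat) : R := sum_f_R0 (fun j => cell_mass cdf M j * grid_up M j) M.
Definition lower_mean (M : nat) : R := sum_f_R0 (fun j => cell_mass cdf M j * grid_down M j) M.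

Section FixedMesh.

Context (M : nat) (HM : (1 <= M)%nat).

Let cdf_grid (j : nat) : R := P (fun w => INR M * Y w <= INR j).
Let cdf_grid_pred (j : nat) : R := match j with O => 0 | S j' => cdf_grid j' end.

Let HMp : 0 < INR M.
Proof. apply lt_0_INR; lia. Qed.

Let F_scaled c : F (fun w => INR M * Y w <= c).
Proof.
  apply (F_ext (fun w => Y w <= c / INR M)); [|apply hY].
  intros w; rewrite Rmult_le_div_iff; tauto.
Qed.

Let cell_mass_grid j : cell_mass cdf M j = cdf_grid j - cdf_grid_pred j.
Proof.
  unfold cell_mass, cdf, cdf_grid_pred, cdf_grid. f_equal.
  - apply P_ext. intros w. rewrite Rmult_le_div_iff; tauto.
  - destruct j as [|j].
    + rewrite (P_ext _ (fun _ => False)); [apply P_false|].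
      intros w; split; [|tauto]. intros h. apply Rmult_le_div_iff in h; auto.
      simpl in h. specialize (hR w). nra.
    + apply P_ext. intros w. rewrite S_INR, <- Rmult_le_div_iff by auto.
      replace (INR j + 1 - 1) with (INR j) by ring. tauto.
Qed.

Let cdf_grid_mono j k : (j <= k)%nat -> cdf_grid j <= cdf_grid k.
Proof. intros h. apply P_mono; auto. intros w hw. apply le_INR in h. lra. Qed.

Let cdf_grid_M : cdf_grid M = 1.
Proof.
  rewrite <- P_total. apply P_ext. intros w; split; auto. intros _. specialize (hR w). nra.
Qed.

Lemma cell_mass_nonneg j : 0 <= cell_mass cdf M j.
Proof.
  rewrite cell_mass_grid. destruct j; simpl.
  - assert (0 <= cdf_grid 0) by (apply P_nonneg; auto). lra.
  - assert (cdf_grid j <= cdf_grid (S j)) by (apply cdf_grid_mono; lia). lra.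
Qed.

Lemma sum_cell_mass : sum_f_R0 (cell_mass cdf M) M = 1.
Proof.
  rewrite (sum_eq _ (fun j => cdf_grid j - cdf_grid_pred j)) by (intros; apply cell_mass_grid).
  rewrite <- cdf_grid_M. exact (sum_f_R0_telescope cdf_grid M).
Qed.

Lemma lower_mean_ge : upper_mean M - / INR M <= lower_mean M.
Proof.
  unfold lower_mean, upper_mean.
  replace (/ INR M) with (/ INR M * sum_f_R0 (cell_mass cdf M) M)
    by (rewrite sum_cell_mass; ring).
  rewrite scal_sum, <- minus_sum.
  apply sum_Rle. intros j _. pose proof (cell_mass_nonneg j).
  assert (0 < / INR M) by (apply Rinv_0_lt_compat, HMp).
  unfold grid_up, grid_down. destruct j as [|j]; simpl pred.
  - simpl. unfold Rdiv. nra.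
  - rewrite S_INR. unfold Rdiv. nra.
Qed.

Let cdf_grid_lt (j : nat) : R := P (fun w => INR M * Y w < INR j).

Let F_scaled_lt j : F (fun w => INR M * Y w < INR j).
Proof. apply F_lt_const; auto. Qed.

Let P_floor_cell k :
  P (fun w => INR k <= INR M * Y w < INR (S k)) = cdf_grid_lt (S k) - cdf_grid_lt k.
Proof.
  unfold cdf_grid_lt.
  rewrite (P_split (fun w => INR M * Y w < INR (S k)) (fun w => INR M * Y w < INR k)) by auto.
  rewrite (P_ext (fun w => INR M * Y w < INR (S k) /\ INR M * Y w < INR k)
                 (fun w => INR M * Y w < INR k)), S_INR by (intros w; rewrite S_INR; lra).
  rewrite (P_ext (fun w => INR M * Y w < INR k + 1 /\ ~ INR M * Y w < INR k)
                 (fun w => INR k <= INR M * Y w < INR k + 1)) by (intros w; lra).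
  ring.
Qed.

Lemma upper_mean_near_floor_mean N : M = S N ->
  floor_mean N <= upper_mean M <= floor_mean N + / INR M.
Proof.
  intros eN. unfold floor_mean. rewrite <- eN.
  assert (E1 : sum_f_R0 (fun k => INR k / INR M * P (fun w => INR k <= INR M * Y w < INR (S k))) M
               = / INR M * (INR M * cdf_grid_lt (S M) - sum_f_R0 (fun k => cdf_grid_lt (S k)) N)).
  { rewrite (sum_eq _ (fun k => INR k * (cdf_grid_lt (S k) - cdf_grid_lt k) * / INR M))
      by (intros; rewrite P_floor_cell; unfold Rdiv; ring).
    rewrite <- scal_sum. f_equal. rewrite eN.
    apply (abel_summation (fun k => cdf_grid_lt (S k)) cdf_grid_lt); auto. }
  assert (E2 : upper_mean M = / INR M * (INR M * cdf_grid M - sum_f_R0 cdf_grid N)).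
  { unfold upper_mean.
    rewrite (sum_eq _ (fun j => INR j * (cdf_grid j - cdf_grid_pred j) * / INR M))
      by (intros; rewrite cell_mass_grid; unfold grid_up, Rdiv; ring).
    rewrite <- scal_sum. f_equal. rewrite eN. apply abel_summation; auto. }
  assert (cdf_lt_top : cdf_grid_lt (S M) = 1).
  { rewrite <- P_total. apply P_ext. intros w; split; auto. intros _.
    specialize (hR w). rewrite S_INR. nra. }
  assert (cdf_le_cdf_lt : forall j, cdf_grid j <= cdf_grid_lt (S j))
    by (intros j; apply P_mono; auto; intros w h; rewrite S_INR; lra).
  assert (cdf_lt_le_cdf : forall j, cdf_grid_lt j <= cdf_grid j)
    by (intros j; apply P_mono; auto; intros w h; lra).
  rewrite E1, E2, cdf_lt_top, cdf_grid_M.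
  assert (D0 : sum_f_R0 cdf_grid N <= sum_f_R0 (fun k => cdf_grid_lt (S k)) N)
    by (apply sum_Rle; intros; apply cdf_le_cdf_lt).
  assert (D1 : sum_f_R0 (fun k => cdf_grid_lt (S k)) N <= sum_f_R0 cdf_grid N + 1).
  { assert (sum_f_R0 (fun k => cdf_grid_lt (S k)) N <= sum_f_R0 (fun k => cdf_grid (S k)) N)
      by (apply sum_Rle; intros; apply cdf_lt_le_cdf).
    assert (sum_f_R0 (fun k => cdf_grid (S k) - cdf_grid k) N = cdf_grid M - cdf_grid O).
    { rewrite eN. clear. induction N; simpl; [ring|]. rewrite IHN. ring. }
    assert (0 <= cdf_grid O) by (apply P_nonneg; auto).
    rewrite minus_sum, cdf_grid_M in *. lra. }
  assert (0 < / INR M) by (apply Rinv_0_lt_compat, HMp).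
  split; nra.
Qed.

End FixedMesh.

Lemma grid_means_close eta : 0 < eta -> exists M0, forall M, (M0 <= M)%nat ->
  (1 <= M)%nat /\ upper_mean M <= mu + eta /\ mu - eta <= lower_mean M.
Proof.
  intros he.
  destruct (hmu (eta / 2)) as [N0 HN0]; [lra|].
  destruct (archimed_cor1 (eta / 2)) as [N1 [h1 h2]]; [lra|].
  exists (S (N0 + N1)). intros [|N] hM; [lia|].
  assert (HM : (1 <= S N)%nat) by lia.
  pose proof (lower_mean_ge (S N) HM) as hlow.
  pose proof (upper_mean_near_floor_mean (S N) HM N eq_refl) as hup.
  specialize (HN0 N ltac:(lia)). unfold R_dist in HN0. apply Rabs_def2 in HN0.
  change (sum_f_R0 _ (S N)) with (floor_mean N) in HN0.
  assert (/ INR (S N) <= / INR N1)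
    by (apply Rinv_le_contravar; [apply lt_0_INR | apply le_INR]; lia).
  split; [lia | split; lra].
Qed.

End MeanApproximation.

(** * The UCB policy *)

Section UCBPaths.

Context (K : nat) (X : nat -> nat -> Omega -> R) (A : nat -> Omega -> nat).
Hypothesis HA : is_ucb_policy K X A.

Fixpoint reward_sum (b s : nat) (w : Omega) : R :=
  match s with O => 0 | S s' => reward_sum b s' w + X b (S s') w end.

Lemma Ssum_reward_sum b t w : Ssum X A b t w = reward_sum b (Npulls A b t w) w.
Proof.
  induction t; simpl; auto. rewrite IHt.
  destruct (Nat.eqb_spec (A (S t) w) b) as [e|e].
  - unfold Xobs. rewrite e. simpl. rewrite e, Nat.eqb_refl, Nat.add_1_r. simpl. ring.
  - rewrite Nat.add_0_r. ring.
Qed.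

Lemma Npulls_le b t w : (Npulls A b t w <= t)%nat.
Proof. induction t; simpl; auto. destruct Nat.eqb; lia. Qed.

Lemma Npulls_mono b t t' w : (t <= t')%nat -> (Npulls A b t w <= Npulls A b t' w)%nat.
Proof. intros h; induction h; simpl; lia. Qed.

Lemma Npulls_initial b t w : (t < b)%nat -> (b <= K)%nat -> Npulls A b t w = O.
Proof.
  intros h hb. destruct HA as [Hinit _]. induction t; simpl; auto.
  rewrite IHt, Hinit by lia. destruct (Nat.eqb_spec (S t) b); lia.
Qed.

Lemma Npulls_pos b t w : (1 <= b <= K)%nat -> (b <= t)%nat -> (1 <= Npulls A b t w)%nat.
Proof.
  intros hb ht. eapply Nat.le_trans; [|apply (Npulls_mono b b t w ht)].
  destruct b; [lia|]. simpl. destruct HA as [Hinit _].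
  rewrite Hinit, Nat.eqb_refl by lia. lia.
Qed.

Lemma nat_measurable_Npulls b : (forall t c, F (fun w => A t w = c)) ->
  forall t, nat_measurable (Npulls A b t).
Proof.
  intros HAm t. induction t; [apply nat_measurable_zero|].
  replace (Npulls A b (S t))
    with (fun w => (Npulls A b t w + indic (fun w => A (S t) w = b) w)%nat).
  - apply nat_measurable_add_indic; auto.
  - apply functional_extensionality; intros w. simpl. unfold indic.
    destruct excluded_middle_informative; destruct (Nat.eqb_spec (A (S t) w) b); auto; lia.
Qed.

Section PullCause.

Context (a astar : nat) (Ha : (1 <= a <= K)%nat) (Hastar : (1 <= astar <= K)%nat).
Context (mus mua gam del : R).

Lemma ucb_pull_cause t w :
  A (S t) w = a -> (K + 1 <= S t)%nat -> (1 <= Npulls A a t w)%nat ->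
  sqrt (exploration_rate (INR (S t)) / (2 * INR (Npulls A a t w))) <= mus - mua - gam - del ->
  (exists s, (1 <= s <= S t)%nat /\
     reward_sum astar s w < INR s * (mus - gam - sqrt (exploration_rate (INR (S t)) / (2 * INR s))))
  \/ INR (Npulls A a t w) * (mua + del) <= reward_sum a (Npulls A a t w) w.
Proof.
  intros HAt Ht HN Hconf.
  set (N := Npulls A a t w) in *. set (Ns := Npulls A astar t w).
  assert (HNs : (1 <= Ns)%nat) by (apply Npulls_pos; auto; lia).
  assert (pN : 0 < INR N) by (apply lt_0_INR; lia).
  assert (pNs : 0 < INR Ns) by (apply lt_0_INR; lia).
  destruct HA as [_ Hucb]. destruct (Hucb (S t) w Ht) as [_ Hmax].
  specialize (Hmax astar Hastar). rewrite HAt in Hmax. unfold ucb_index in Hmax.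
  replace (S t - 1)%nat with t in Hmax by lia. rewrite !Ssum_reward_sum in Hmax.
  fold N Ns in Hmax. fold (exploration_rate (INR (S t))) in Hmax.
  destruct (Rlt_dec (reward_sum astar Ns w / INR Ns
                     + sqrt (exploration_rate (INR (S t)) / (2 * INR Ns))) (mus - gam)) as [hl|hl].
  - left. exists Ns. split; [split; auto; pose proof (Npulls_le astar t w); unfold Ns; lia|].
    apply (Rmult_lt_compat_l (INR Ns)) in hl; auto.
    replace (INR Ns * (reward_sum astar Ns w / INR Ns
                       + sqrt (exploration_rate (INR (S t)) / (2 * INR Ns))))
      with (reward_sum astar Ns w + INR Ns * sqrt (exploration_rate (INR (S t)) / (2 * INR Ns)))
      in hl by (field; lra).
    lra.
  - right. assert (reward_sum a N w / INR N >= mua + del) by lra.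
    apply (Rmult_ge_compat_l (INR N)) in H; [|lra].
    replace (INR N * (reward_sum a N w / INR N)) with (reward_sum a N w) in H by (field; lra).
    lra.
Qed.

Lemma Npulls_le_bad_events (n u : nat) (Hu : (1 <= u)%nat)
  (low_event : nat -> nat -> Omega -> Prop) (high_event : nat -> Omega -> Prop) :
  (forall t N, (K + 1 <= t <= n)%nat -> (u <= N)%nat ->
     sqrt (exploration_rate (INR t) / (2 * INR N)) <= mus - mua - gam - del) ->
  (forall s t w, (1 <= s)%nat ->
     reward_sum astar s w < INR s * (mus - gam - sqrt (exploration_rate (INR t) / (2 * INR s))) ->
     low_event s t w) ->
  (forall s w, (1 <= s)%nat -> INR s * (mua + del) <= reward_sum a s w -> high_event s w) ->
  forall w, (Npulls A a n w
             <= u + count_below (fun t w => (K + 1 <= t)%nat /\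
                                  exists s, (1 <= s <= t)%nat /\ low_event s t w) (S n) w
                + count_below (fun s w => (u <= s)%nat /\ high_event s w) (S n) w)%nat.
Proof.
  intros Hconf Hlow Hhigh w.
  set (EB := fun t w => (K + 1 <= t)%nat /\ exists s, (1 <= s <= t)%nat /\ low_event s t w).
  set (ED := fun s w => (u <= s)%nat /\ high_event s w).
  assert (Inv : forall t, (t <= n)%nat ->
    (Npulls A a t w <= u + count_below EB (S t) w + count_below ED (Npulls A a t w) w)%nat).
  { induction t; intros ht; [simpl; lia|].
    specialize (IHt ltac:(lia)). simpl Npulls. set (N := Npulls A a t w) in *.
    assert (cB : (count_below EB (S t) w <= count_below EB (S (S t)) w)%nat)
      by (apply count_below_mono; lia).
    destruct (Nat.eqb_spec (A (S t) w) a) as [e|e]; [|rewrite Nat.add_0_r; lia].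
    destruct (le_lt_dec u N) as [hu|hu]; [|rewrite Nat.add_1_r; simpl; lia].
    assert (hKt : (K + 1 <= S t)%nat).
    { destruct (le_lt_dec (K + 1) (S t)) as [h|h]; auto. exfalso.
      destruct HA as [Hinit _]. rewrite Hinit in e by lia. subst a.
      assert (N = O) by (apply Npulls_initial; lia). lia. }
    destruct (ucb_pull_cause t w e hKt ltac:(fold N; lia) ltac:(apply Hconf; [lia | auto]))
      as [[s [hs hsum]] | hhigh].
    - assert (EB (S t) w) by (split; auto; exists s; split; auto; apply Hlow; auto; lia).
      change (count_below EB (S (S t)) w) with (count_below EB (S t) w + indic (EB (S t)) w)%nat.
      rewrite indic_true by auto.
      pose proof (count_below_mono ED N (N + 1) w ltac:(lia)). lia.
    - assert (ED N w) by (split; auto; apply Hhigh; auto; lia).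
      rewrite Nat.add_1_r.
      change (count_below ED (S N) w) with (count_below ED N w + indic (ED N) w)%nat.
      rewrite indic_true by auto. lia. }
  specialize (Inv n (le_n n)).
  pose proof (Npulls_le a n w).
  pose proof (count_below_mono ED (Npulls A a n w) (S n) w ltac:(lia)).
  lia.
Qed.

End PullCause.

End UCBPaths.

Fixpoint reward_indices (b s : nat) : list (nat * nat) :=
  match s with O => nil | S s' => (b, S s') :: reward_indices b s' end.

Lemma in_reward_indices b s i : In i (reward_indices b s) -> fst i = b /\ (1 <= snd i <= s)%nat.
Proof. induction s; simpl; [tauto|]. intros [h|h]; [subst; simpl; lia | apply IHs in h; lia]. Qed.

Lemma reward_indices_NoDup b s : NoDup (reward_indices b s).
Proof.
  induction s; simpl; constructor; auto. intros h. apply in_reward_indices in h. simpl in h. lia.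
Qed.

Lemma reward_indices_length b s : length (reward_indices b s) = s.
Proof. induction s; simpl; auto. Qed.

Section Arms.

Context (K : nat) (X : nat -> nat -> Omega -> R).
Hypothesis Hmeas : forall b s, (1 <= b <= K)%nat -> (1 <= s)%nat -> measurable_rv F (X b s).
Hypothesis Hrange : forall b s w, (1 <= b <= K)%nat -> (1 <= s)%nat -> 0 <= X b s w <= 1.
Hypothesis Hindep : indep_family P
  (fun bs : nat * nat => (1 <= fst bs <= K)%nat /\ (1 <= snd bs)%nat)
  (fun bs : nat * nat => X (fst bs) (snd bs)).
Hypothesis Hiid : forall b s, (1 <= b <= K)%nat -> (1 <= s)%nat -> same_law P (X b s) (X b 1%nat).

Definition reward (i : nat * nat) : Omega -> R := X (fst i) (snd i).

Context (b : nat) (Hb : (1 <= b <= K)%nat) (M : nat) (HM : (1 <= M)%nat).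

Lemma reward_sum_in_cells s w : exists k, cells reward M (reward_indices b s) k w /\
  sum_list (grid_down M) k <= reward_sum X b s w <= sum_list (grid_up M) k.
Proof.
  induction s as [|s IH]; [exists nil; simpl; lra|].
  destruct IH as [k [hk1 hk2]].
  assert (hX : 0 <= X b (S s) w <= 1) by (apply Hrange; auto; lia).
  destruct (in_cell_exists M (X b (S s) w) hX) as [j [_ hj]].
  exists (j :: k). simpl. split; [auto|].
  pose proof (in_cell_grid M _ j HM (proj1 hX) hj). lra.
Qed.

Lemma F_reward_cells_event s g : F (cells_event reward M (reward_indices b s) g).
Proof.
  apply F_cells_event; auto.
  - intros i hi. apply in_reward_indices in hi. unfold reward. destruct hi as [-> ?].
    apply Hmeas; auto; lia.
  - intros i w hi. apply in_reward_indices in hi. unfold reward. destruct hi as [-> ?].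
    apply Hrange; auto; lia.
Qed.

Lemma chernoff_rewards v th c0 g s :
  (forall j, (j <= M)%nat -> 0 <= v j <= 1) ->
  (forall k, g k -> th * c0 <= th * sum_list v k) ->
  P (cells_event reward M (reward_indices b s) g)
  <= exp (- th * c0 + INR s * (th * sum_f_R0 (fun j => cell_mass (cdf (X b 1%nat)) M j * v j) M
                               + th ^ 2 / 8)).
Proof.
  intros Hv Hg. rewrite <- (reward_indices_length b s) at 2.
  assert (hX1 : measurable_rv F (X b 1%nat)) by (apply Hmeas; auto).
  assert (hR1 : forall w, 0 <= X b 1%nat w <= 1) by (intros; apply Hrange; auto).
  apply (chernoff_cells reward (reward_indices b s) M HM).
  - intros i hi. apply in_reward_indices in hi. unfold reward. destruct hi as [-> ?].
    apply Hmeas; auto; lia.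
  - intros i w hi. apply in_reward_indices in hi. unfold reward. destruct hi as [-> ?].
    apply Hrange; auto; lia.
  - intros l0 c hnd hinc. apply Hindep; auto. rewrite Forall_forall. intros x hx.
    apply hinc, in_reward_indices in hx. lia.
  - intros i c hi. apply in_reward_indices in hi. unfold reward, cdf. destruct hi as [-> ?].
    apply Hiid; auto; lia.
  - intros j _. apply cell_mass_nonneg; auto.
  - apply sum_cell_mass; auto.
  - exact Hv.
  - exact Hg.
  - apply reward_indices_NoDup.
  - intros x hx; auto.
Qed.

Lemma P_high_rewards mu del s : 0 < del -> upper_mean (X b 1%nat) M <= mu + del / 2 ->
  P (cells_event reward M (reward_indices b s)
       (fun k => INR s * (mu + del) <= sum_list (grid_up M) k))
  <= exp (- (INR s * del ^ 2 / 2)).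
Proof.
  intros Hdel Hm.
  eapply Rle_trans.
  { apply (chernoff_rewards (grid_up M) (2 * del) (INR s * (mu + del))).
    - intros j hj. apply grid_up_range; auto.
    - intros k hk. apply Rmult_le_compat_l; lra. }
  apply exp_le_exp. fold (upper_mean (X b 1%nat) M).
  pose proof (pos_INR s).
  assert (INR s * del * (upper_mean (X b 1%nat) M - (mu + del / 2)) <= 0).
  { assert (0 <= INR s * del) by nra. nra. }
  simpl. nra.
Qed.

Lemma P_low_rewards mu gam s f : 0 < gam -> mu - gam / 2 <= lower_mean (X b 1%nat) M ->
  (1 <= s)%nat -> 0 <= f ->
  P (cells_event reward M (reward_indices b s)
       (fun k => sum_list (grid_down M) k <= INR s * (mu - gam - sqrt (f / (2 * INR s)))))
  <= exp (- (INR s * gam ^ 2 / 2) - f).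
Proof.
  intros Hgam Hm Hs Hf.
  set (r := sqrt (f / (2 * INR s))).
  assert (hs : 1 <= INR s) by (apply (le_INR 1); auto).
  assert (hr : 0 <= r) by apply sqrt_pos.
  assert (hr2 : r * r = f / (2 * INR s)).
  { apply sqrt_sqrt. apply Rmult_le_pos; auto. left; apply Rinv_0_lt_compat; lra. }
  assert (hr3 : 2 * INR s * (r * r) = f) by (rewrite hr2; field; lra).
  set (x := gam / 2 + r). assert (0 <= x) by (unfold x; lra).
  eapply Rle_trans.
  { apply (chernoff_rewards (grid_down M) (- (4 * x)) (INR s * (mu - gam - r))).
    - intros j hj. apply grid_down_range; auto.
    - intros k hk. fold r in hk. nra. }
  apply exp_le_exp. fold (lower_mean (X b 1%nat) M). set (m := lower_mean (X b 1%nat) M).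
  replace (- - (4 * x) * (INR s * (mu - gam - r)) + INR s * (- (4 * x) * m + (- (4 * x)) ^ 2 / 8))
    with (4 * x * INR s * (mu - gam - r - m) + 2 * INR s * x * x) by field.
  assert (4 * x * INR s * (mu - gam - r - m) <= 4 * x * INR s * (- x))
    by (apply Rmult_le_compat_l; [nra | unfold x, m in *; lra]).
  assert (2 * INR s * x * x >= 2 * INR s * (gam ^ 2 / 4 + r * r)).
  { unfold x. assert (0 <= gam * r) by nra. nra. }
  nra.
Qed.

End Arms.

Section UCBAnalysis.

Context (K : nat) (HK : (2 <= K)%nat) (X : nat -> nat -> Omega -> R) (mu : nat -> R).
Hypothesis Hmeas : forall b s, (1 <= b <= K)%nat -> (1 <= s)%nat -> measurable_rv F (X b s).
Hypothesis Hrange : forall b s w, (1 <= b <= K)%nat -> (1 <= s)%nat -> 0 <= X b s w <= 1.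
Hypothesis Hindep : indep_family P
  (fun bs : nat * nat => (1 <= fst bs <= K)%nat /\ (1 <= snd bs)%nat)
  (fun bs : nat * nat => X (fst bs) (snd bs)).
Hypothesis Hiid : forall b s, (1 <= b <= K)%nat -> (1 <= s)%nat -> same_law P (X b s) (X b 1%nat).
Hypothesis Hmean : forall b, (1 <= b <= K)%nat -> is_mean01 P (X b 1%nat) (mu b).
Context (astar a : nat) (Hastar : (1 <= astar <= K)%nat) (Ha : (1 <= a <= K)%nat).
Context (A : nat -> Omega -> nat).
Hypothesis HAmeas : forall t b, F (fun w => A t w = b).
Hypothesis HA : is_ucb_policy K X A.

Section FixedAccuracy.

Context (M : nat) (HM : (1 <= M)%nat) (del : R) (Hdel : 0 < del).
Hypothesis Hup : upper_mean (X a 1%nat) M <= mu a + del / 2.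
Hypothesis Hlow : mu astar - del / 2 <= lower_mean (X astar 1%nat) M.

(* Discretised versions of the events "the empirical mean of the first [s] rewards of [astar],
   plus the exploration bonus at time [t], is below [mu astar - del]" and "the empirical mean
   of the first [s] rewards of [a] is at least [mu a + del]". *)
Definition low_event (s t : nat) : Omega -> Prop :=
  cells_event (reward X) M (reward_indices astar s)
    (fun k => sum_list (grid_down M) k
              <= INR s * (mu astar - del - sqrt (exploration_rate (INR t) / (2 * INR s)))).

Definition high_event (s : nat) : Omega -> Prop :=
  cells_event (reward X) M (reward_indices a s)
    (fun k => INR s * (mu a + del) <= sum_list (grid_up M) k).

Definition optimal_index_low (t : nat) (w : Omega) : Prop :=
  (K + 1 <= t)%nat /\ exists s, (1 <= s <= t)%nat /\ low_event s t w.

Definition suboptimal_mean_high (u s : nat) (w : Omega) : Prop :=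
  (u <= s)%nat /\ high_event s w.

Lemma F_optimal_index_low t : F (optimal_index_low t).
Proof.
  apply F_and; [apply F_const|].
  apply (F_ext (fun w => exists s, (s <= t)%nat /\ ((1 <= s)%nat /\ low_event s t w))).
  { intros w; split; intros [s hs]; exists s; tauto. }
  apply F_exists_le. intros s _. apply F_and; [apply F_const|].
  apply (F_reward_cells_event K X Hmeas Hrange); auto.
Qed.

Lemma F_suboptimal_mean_high u s : F (suboptimal_mean_high u s).
Proof. apply F_and; [apply F_const | apply (F_reward_cells_event K X Hmeas Hrange); auto]. Qed.

Lemma Npulls_le_bad_ucb_events n u : (1 <= u)%nat ->
  exploration_rate (INR n) / (2 * INR u) <= (mu astar - mu a - del - del) ^ 2 ->
  0 < mu astar - mu a - del - del ->
  forall w, (Npulls A a n w <= u + count_below optimal_index_low (S n) w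
                             + count_below (suboptimal_mean_high u) (S n) w)%nat.
Proof.
  intros Hu Hexpl Hgap.
  apply (Npulls_le_bad_events K X A HA a astar Ha Hastar (mu astar) (mu a) del del n u Hu).
  - intros t N ht hN.
    assert (hf : 0 <= exploration_rate (INR t) <= exploration_rate (INR n)).
    { apply exploration_rate_mono; [|apply le_INR; lia].
      replace 3 with (INR 3) by (simpl; ring). apply le_INR. lia. }
    rewrite <- (sqrt_pow2 (mu astar - mu a - del - del)) by lra. apply sqrt_le_1_alt.
    eapply Rle_trans; [|apply Hexpl].
    assert (INR u <= INR N) by (apply le_INR; lia). assert (0 < INR u) by (apply lt_0_INR; lia).
    unfold Rdiv. apply Rmult_le_compat; try lra.
    + left; apply Rinv_0_lt_compat; lra.
    + apply Rinv_le_contravar; lra.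
  - intros s t w hs hsum.
    destruct (reward_sum_in_cells K X Hrange astar Hastar M HM s w) as [k [hk1 [hk2 _]]].
    exists k. split; auto. lra.
  - intros s w hs hsum.
    destruct (reward_sum_in_cells K X Hrange a Ha M HM s w) as [k [hk1 [_ hk3]]].
    exists k. split; auto. lra.
Qed.

Lemma exp_neg_half_sq_range : 0 < exp (- (del ^ 2 / 2)) < 1.
Proof. split; [apply exp_pos|]. rewrite <- exp_0. apply exp_increasing. nra. Qed.

Lemma sum_P_suboptimal_mean_high_le u n :
  sum_below (fun s => P (suboptimal_mean_high u s)) (S n) <= / (1 - exp (- (del ^ 2 / 2))).
Proof.
  pose proof exp_neg_half_sq_range.
  rewrite sum_below_sum_f_R0. eapply Rle_trans; [|apply geometric_sum_le; lra].
  apply sum_Rle. intros s _.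
  eapply Rle_trans.
  { apply (P_mono (suboptimal_mean_high u s) (high_event s)); [apply F_suboptimal_mean_high | |].
    - apply (F_reward_cells_event K X Hmeas Hrange); auto.
    - intros w [_ h]; auto. }
  eapply Rle_trans; [apply (P_high_rewards K X Hmeas Hrange Hindep Hiid a Ha M HM); auto|].
  rewrite exp_pow. right. f_equal. field.
Qed.

Lemma P_low_event_le s t : 0 <= exploration_rate (INR t) ->
  P (fun w => (1 <= s)%nat /\ low_event s t w)
  <= exp (- (del ^ 2 / 2)) ^ s * exp (- exploration_rate (INR t)).
Proof.
  intros hft. destruct s as [|s].
  - rewrite (P_ext _ (fun _ => False)), P_false by (intros w; split; [intros [h _]; lia | tauto]).
    simpl. pose proof (exp_pos (- exploration_rate (INR t))). lra.
  - eapply Rle_trans.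
    { apply (P_mono _ (low_event (S s) t));
        [apply F_and; [apply F_const|] | | intros w [_ h]; auto];
        apply (F_reward_cells_event K X Hmeas Hrange); auto. }
    eapply Rle_trans.
    { apply (P_low_rewards K X Hmeas Hrange Hindep Hiid astar Hastar M HM (mu astar) del (S s));
        auto; lia. }
    rewrite exp_pow, <- exp_plus. right. f_equal. field.
Qed.

Lemma P_optimal_index_low_le t :
  P (optimal_index_low t)
  <= if Nat.leb 3 t then / (1 - exp (- (del ^ 2 / 2))) * exp (- exploration_rate (INR t)) else 0.
Proof.
  pose proof exp_neg_half_sq_range as Hq.
  destruct (le_lt_dec (K + 1) t) as [ht|ht].
  2:{ rewrite (P_ext _ (fun _ => False)), P_false by (intros w; split; [intros [h _]; lia | tauto]).
      destruct (Nat.leb 3 t); [|lra].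
      pose proof (exp_pos (- exploration_rate (INR t))).
      assert (0 < / (1 - exp (- (del ^ 2 / 2)))) by (apply Rinv_0_lt_compat; lra). nra. }
  replace (Nat.leb 3 t) with true by (symmetry; apply Nat.leb_le; lia).
  assert (ht3 : 3 <= INR t) by (replace 3 with (INR 3) by (simpl; ring); apply le_INR; lia).
  assert (hft : 0 <= exploration_rate (INR t)) by (apply (exploration_rate_mono _ (INR t)); lra).
  rewrite (P_ext (optimal_index_low t)
             (fun w => exists s, (s <= t)%nat /\ ((1 <= s)%nat /\ low_event s t w))).
  2:{ intros w; unfold optimal_index_low; split.
      - intros [_ [s hs]]; exists s; tauto.
      - intros [s hs]; split; auto. exists s; tauto. }
  eapply Rle_trans.
  { apply P_union_bound. intros s.
    apply F_and; [apply F_const | apply (F_reward_cells_event K X Hmeas Hrange); auto]. }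
  eapply Rle_trans; [apply sum_Rle; intros s _; apply P_low_event_le; auto|].
  rewrite <- scal_sum, (Rmult_comm (/ _)). apply Rmult_le_compat_l; [left; apply exp_pos|].
  apply geometric_sum_le; lra.
Qed.

Lemma expect_Npulls_le_accuracy eta : 0 < eta -> 0 < mu astar - mu a - del - del ->
  exists C, forall n, (3 <= n)%nat ->
    expect_nat P n (Npulls A a n)
    <= exploration_rate (INR n) / (2 * (mu astar - mu a - del - del) ^ 2) + eta * ln (INR n) + C.
Proof.
  intros Heta Hgap. set (gap := mu astar - mu a - del - del) in *.
  pose proof exp_neg_half_sq_range as Hq.
  set (Cq := / (1 - exp (- (del ^ 2 / 2)))).
  assert (HCq : 0 < Cq) by (apply Rinv_0_lt_compat; lra).
  destruct (ln_unbounded_nat (Cq / eta)) as [T0 [HT0 HlnT0]].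
  exists (1 + Cq * INR T0 + eta + Cq). intros n Hn.
  assert (Hn3 : 3 <= INR n) by (replace 3 with (INR 3) by (simpl; ring); apply le_INR; auto).
  destruct (sample_size_exists (exploration_rate (INR n)) gap) as [u [Hu1 [Hexpl Hu]]];
    [apply exploration_rate_pos; auto | auto |].
  eapply Rle_trans.
  { apply (expect_nat_le_count2 _ n optimal_index_low (suboptimal_mean_high u) (S n) (S n) u).
    - apply nat_measurable_Npulls; auto.
    - intros w. apply Npulls_le.
    - apply F_optimal_index_low.
    - apply F_suboptimal_mean_high.
    - apply Npulls_le_bad_ucb_events; auto. }
  assert (Hlow_sum : sum_below (fun t => P (optimal_index_low t)) (S n)
                     <= Cq * INR T0 + eta * (1 + ln (INR n))).
  { rewrite sum_below_sum_f_R0. apply sum_exp_neg_exploration_rate_le; auto; try lia; try lra.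
    apply P_optimal_index_low_le. }
  pose proof (sum_P_suboptimal_mean_high_le u n) as Hhigh_sum. fold Cq in Hhigh_sum.
  lra.
Qed.

End FixedAccuracy.

Lemma expect_Npulls_le del eta : 0 < del -> 0 < eta -> 0 < mu astar - mu a - del - del ->
  exists C, forall n, (3 <= n)%nat ->
    expect_nat P n (Npulls A a n)
    <= exploration_rate (INR n) / (2 * (mu astar - mu a - del - del) ^ 2) + eta * ln (INR n) + C.
Proof.
  intros Hdel Heta Hgap.
  assert (hXa : measurable_rv F (X a 1%nat)) by (apply Hmeas; lia).
  assert (hRa : forall w, 0 <= X a 1%nat w <= 1) by (intros; apply Hrange; lia).
  assert (hXs : measurable_rv F (X astar 1%nat)) by (apply Hmeas; lia).
  assert (hRs : forall w, 0 <= X astar 1%nat w <= 1) by (intros; apply Hrange; lia).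
  destruct (grid_means_close _ _ hXa hRa (Hmean a Ha) (del / 2)) as [Ma HMa]; [lra|].
  destruct (grid_means_close _ _ hXs hRs (Hmean astar Hastar) (del / 2)) as [Ms HMs]; [lra|].
  destruct (HMa (S (Ma + Ms)) ltac:(lia)) as [HM [Hup _]].
  destruct (HMs (S (Ma + Ms)) ltac:(lia)) as [_ [_ Hlow]].
  apply (expect_Npulls_le_accuracy (S (Ma + Ms)) HM del Hdel); auto.
Qed.

End UCBAnalysis.

End ProbabilitySpace.

Lemma const_le_log_plus_inv c C : 0 < c ->
  exists C2, 0 < C2 /\ forall n, (1 <= n)%nat -> C <= c * ln (INR n) + C2 / INR n.
Proof.
  intros hc. destruct (INR_unbounded (exp (C / c))) as [n0 hn0].
  exists (Rabs C * INR n0 + 1). pose proof (pos_INR n0). pose proof (Rabs_pos C).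
  split; [nra|]. intros n hn.
  assert (hn1 : 1 <= INR n) by (apply (le_INR 1); auto).
  assert (hL : 0 <= ln (INR n)) by (rewrite <- ln_1; apply ln_le_ln; lra).
  assert (hq : 0 < (Rabs C * INR n0 + 1) / INR n) by (apply Rdiv_lt_0_compat; nra).
  destruct (le_lt_dec n0 n) as [h|h].
  - assert (C / c <= ln (INR n)).
    { rewrite <- (ln_exp (C / c)). apply ln_le_ln; [apply exp_pos|].
      apply le_INR in h. lra. }
    assert (C <= c * ln (INR n)).
    { apply (Rmult_le_reg_r (/ c)); [apply Rinv_0_lt_compat; lra|].
      replace (c * ln (INR n) * / c) with (ln (INR n)) by (field; lra). unfold Rdiv in *. lra. }
    lra.
  - assert (INR n <= INR n0) by (apply le_INR; lia).
    assert (Rabs C <= (Rabs C * INR n0 + 1) / INR n).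
    { apply Rmult_le_div_iff; [lra|]. nra. }
    pose proof (Rle_abs C). nra.
Qed.

Lemma inv_one_minus_sq_le y : 0 < y <= 1 / 10 -> / (1 - y) ^ 2 <= 1 + 3 * y.
Proof.
  intros hy. assert (0 < (1 - y) ^ 2) by (apply pow_lt; lra).
  apply (Rmult_le_reg_l ((1 - y) ^ 2)); auto. rewrite Rinv_r by lra. simpl. nra.
Qed.

(* With [del = Dl e / 20] and [eta = e / (8 Dl^2)], where [e = min eps 1], the bound of
   [expect_Npulls_le] has leading coefficient [(1 + 3e/10 + e/4) / (2 Dl^2)], and the
   constant costs another [e/4] of it up to an [O(1/n)] term. *)
Lemma exploration_bound_absorb Dl eps : 0 < Dl -> 0 < eps ->
  exists del eta, 0 < del /\ 0 < eta /\ 0 < Dl - del - del /\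
  forall C, exists C2, 0 < C2 /\ forall n, (3 <= n)%nat ->
    exploration_rate (INR n) / (2 * (Dl - del - del) ^ 2) + eta * ln (INR n) + C
    <= ln (INR n) / (2 * Dl ^ 2) * (1 + eps) + 3 / Dl ^ 2 * ln (ln (INR n)) + C2 / INR n.
Proof.
  intros hD heps. set (e := Rmin eps 1).
  assert (he : 0 < e <= 1) by (unfold e; split; [apply Rmin_glb_lt | apply Rmin_r]; lra).
  assert (he' : e <= eps) by apply Rmin_l.
  assert (hD2 : 0 < Dl ^ 2) by (apply pow_lt; lra).
  exists (Dl * e / 20), (e / (8 * Dl ^ 2)).
  split; [nra|]. split; [apply Rdiv_lt_0_compat; lra|]. split; [nra|].
  intros C. destruct (const_le_log_plus_inv (e / (8 * Dl ^ 2)) C) as [C2 [hC2 HC2]].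
  { apply Rdiv_lt_0_compat; lra. }
  exists C2. split; auto. intros n hn.
  assert (hn3 : 3 <= INR n) by (replace 3 with (INR 3) by (simpl; ring); apply le_INR; auto).
  specialize (HC2 n ltac:(lia)).
  set (L := ln (INR n)) in *. set (LL := ln L).
  assert (hL : 1 <= L) by (apply ln_ge_1; auto).
  assert (hLL : 0 <= LL) by (unfold LL; rewrite <- ln_1; apply ln_le_ln; lra).
  set (y := e / 10). assert (hy : 0 < y <= 1 / 10) by (unfold y; lra).
  replace (Dl - Dl * e / 20 - Dl * e / 20) with (Dl * (1 - y)) by (unfold y; field).
  set (c := / (1 - y) ^ 2).
  assert (hc1 : c <= 1 + 3 * y) by (apply inv_one_minus_sq_le; auto).
  assert (hc2 : c <= 2) by lra.
  assert (hc : 0 < c) by (apply Rinv_0_lt_compat, pow_lt; lra).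
  set (ia := / Dl ^ 2). assert (hia : 0 < ia) by (apply Rinv_0_lt_compat; lra).
  replace (exploration_rate (INR n) / (2 * (Dl * (1 - y)) ^ 2)) with ((L + 3 * LL) * ia * c / 2)
    by (unfold exploration_rate, ia, c; fold L LL; field; split; lra).
  replace (L / (2 * Dl ^ 2) * (1 + eps)) with (L * ia * (1 + eps) / 2) by (unfold ia; field; lra).
  replace (3 / Dl ^ 2 * LL) with (3 * LL * ia) by (unfold ia; field; lra).
  replace (e / (8 * Dl ^ 2) * L) with (L * ia * e / 8) in * by (unfold ia; field; lra).
  assert (L * ia * (c - (1 + 3 * y)) <= 0) by (assert (0 <= L * ia) by nra; nra).
  assert (LL * ia * (c - 2) <= 0) by (assert (0 <= LL * ia) by nra; nra).
  assert (L * ia * e <= L * ia * eps) by (apply Rmult_le_compat_l; nra).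
  assert (0 <= L * ia * eps) by (apply Rmult_le_pos; nra).
  unfold y in *. lra.
Qed.

Theorem proposition1
  (Omega : Type) (F : (Omega -> Prop) -> Prop) (P : (Omega -> Prop) -> R)
  (HP : prob_space Omega F P)
  (K : nat) (HK : (2 <= K)%nat)
  (X : nat -> nat -> Omega -> R) (mu : nat -> R)
  (Hmeas : forall b s, (1 <= b <= K)%nat -> (1 <= s)%nat -> measurable_rv F (X b s))
  (Hrange : forall b s w, (1 <= b <= K)%nat -> (1 <= s)%nat -> 0 <= X b s w <= 1)
  (Hindep : indep_family P
     (fun bs : nat * nat => (1 <= fst bs <= K)%nat /\ (1 <= snd bs)%nat)
     (fun bs : nat * nat => X (fst bs) (snd bs)))
  (Hiid : forall b s, (1 <= b <= K)%nat -> (1 <= s)%nat -> same_law P (X b s) (X b 1%nat))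
  (Hmean : forall b, (1 <= b <= K)%nat -> is_mean01 P (X b 1%nat) (mu b))
  (astar a : nat)
  (Hastar : (1 <= astar <= K)%nat)
  (Hopt : forall b, (1 <= b <= K)%nat -> mu b <= mu astar)
  (Ha : (1 <= a <= K)%nat) (Hsub : mu a < mu astar)
  (A : nat -> Omega -> nat)
  (HAmeas : forall t b, F (fun w => A t w = b))
  (HA : is_ucb_policy K X A) :
  exists C1 : R, 0 < C1 /\
  forall eps : R, 0 < eps ->
  exists C2 beta : R, 0 < C2 /\ 0 < beta /\
  forall n : nat, (3 <= n)%nat ->
    expect_nat P n (Npulls A a n)
    <= ln (INR n) / (2 * (mu a - mu astar) ^ 2) * (1 + eps)
       + C1 * ln (ln (INR n))
       + C2 / Rpower (INR n) beta.
Proof.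
  set (Dl := mu astar - mu a). assert (hD : 0 < Dl) by (unfold Dl; lra).
  exists (3 / Dl ^ 2). split; [apply Rdiv_lt_0_compat; [lra | apply pow_lt; lra]|].
  intros eps heps.
  destruct (exploration_bound_absorb Dl eps hD heps) as [del [eta [hdel [heta [hgap Habs]]]]].
  destruct (expect_Npulls_le HP K HK X mu Hmeas Hrange Hindep Hiid Hmean astar a Hastar Ha
              A HAmeas HA del eta hdel heta hgap) as [C HC].
  destruct (Habs C) as [C2 [hC2 HC2]].
  exists C2, 1. split; [auto | split; [lra|]]. intros n hn.
  rewrite Rpower_1 by (apply lt_0_INR; lia).
  replace ((mu a - mu astar) ^ 2) with (Dl ^ 2) by (unfold Dl; ring).
  eapply Rle_trans; [apply HC | apply HC2]; auto.
Qed.
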